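(* Let $\mathfrak A$ and $\mathcal A$ be Banach algebras with $\mathcal A$ a Banach $\mathfrak A$-module with compatible actions, and suppose $\mathcal A\widehat\otimes_{\mathfrak A}\mathcal A$ is a commutative Banach $\mathcal A$-$\mathfrak A$-module. Consider: (i) $\mathcal A$ is module pseudo-amenable; (ii) there is a module approximate morphism $(S_l)$ from $\mathcal A/\mathcal J$ into $\mathcal A\widehat\otimes_{\mathfrak A}\mathcal A$ such that $\|\widetilde\omega_{\mathcal A}(S_l(a+\mathcal J))-(a+\mathcal J)\|\to0$ for all $a\in\mathcal A$; (iii) there is a module $w^*$-approximate morphism $(T_l)$ from $(\mathcal A\widehat\otimes_{\mathfrak A}\mathcal A)^*$ into $(\mathcal A/\mathcal J)^*$ such that $T_l\circ\widetilde\omega_{\mathcal A}^*\to\mathrm{id}_{(\mathcal A/\mathcal J)^*}$ in the weak$^*$ operator topology. Then (i) $\Rightarrow$ (ii) $\Rightarrow$ (iii). If in addition $\mathcal A/\mathcal J$ has a central approximate identity, then (i), (ii), (iii) are equivalent.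
   Context: Compatible actions: $\alpha\cdot(ab)=(\alpha\cdot a)b$, $(ab)\cdot\alpha=a(b\cdot\alpha)$. A Banach $\mathcal A$-$\mathfrak A$-module is a Banach $\mathcal A$-bimodule and $\mathfrak A$-bimodule $X$ with $\alpha\cdot(a\cdot x)=(\alpha\cdot a)\cdot x$, $a\cdot(\alpha\cdot x)=(a\cdot\alpha)\cdot x$, $a\cdot(x\cdot\alpha)=(a\cdot x)\cdot\alpha$ and analogous right-hand identities; commutative if $\alpha\cdot x=x\cdot\alpha$. $\mathcal I$ is the closed span of $\{a\cdot\alpha\otimes b-a\otimes\alpha\cdot b\}$ in $\mathcal A\widehat\otimes\mathcal A$, $\mathcal A\widehat\otimes_{\mathfrak A}\mathcal A=(\mathcal A\widehat\otimes\mathcal A)/\mathcal I$ (an $\mathcal A$-bimodule via $c\cdot(a\otimes b)=ca\otimes b$, $(a\otimes b)\cdot c=a\otimes bc$), $\mathcal J$ is the closed ideal of $\mathcal A$ generated by $\{(a\cdot\alpha)b-a(\alpha\cdot b)\}$ ($\mathcal A/\mathcal J$ is an $\mathcal A$-bimodule and $\mathfrak A$-bimodule canonically), $\widetilde\omega_{\mathcal A}(a\otimes b+\mathcal I)=ab+\mathcal J$. $\mathcal A$ is module pseudo-amenable if there is a net $(\widetilde u_j)\subseteq\mathcal A\widehat\otimes_{\mathfrak A}\mathcal A$ with $(\widetilde\omega_{\mathcal A}(\widetilde u_j))$ an approximate identity of $\mathcal A/\mathcal J$ and $a\cdot\widetilde u_j-\widetilde u_j\cdot a\to0$ for all $a\in\mathcal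 A$. For Banach spaces $X,Y$ that are Banach $\mathcal A$-modules and $\mathfrak A$-modules, a module approximate morphism from $X$ to $Y$ is a net $(T_k)$ of bounded linear maps $X\to Y$ with $\|T_k(a\cdot x)-a\cdot T_k(x)\|\to0$, $\|T_k(x\cdot a)-T_k(x)\cdot a\|\to0$, $\|T_k(\alpha\cdot x)-\alpha\cdot T_k(x)\|\to0$, $\|T_k(x\cdot\alpha)-T_k(x)\cdot\alpha\|\to0$ for all $a\in\mathcal A,\alpha\in\mathfrak A,x\in X$; if $Y$ is a dual space and norm convergence is replaced by weak$^*$ convergence, $(T_k)$ is a module $w^*$-approximate morphism. The weak$^*$ operator topology on $B(X,Y^* )$ is given by the seminorms $\Phi\mapsto|\langle\Phi(x),y\rangle|$, $x\in X,y\in Y$. *)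

(* All normed spaces are normedModType K (norm values in K). *)
From HB Require Import structures.
From mathcomp Require Import all_boot all_order all_algebra.
From mathcomp Require Import all_classical all_reals all_analysis.
From mathcomp Require Export complex.
Import Order.TTheory GRing.Theory Num.Theory.
Import numFieldNormedType.Exports.
Local Open Scope ring_scope.
Local Open Scope classical_set_scope.

Set Implicit Arguments.
Unset Strict Implicit.
Unset Printing Implicit Defensive.

Definition linear_map {K : numFieldType} {X Y : normedModType K} (f : X -> Y) :=
  (forall x y, f (x + y) = f x + f y) /\ (forall (k : K) x, f (k *: x) = k *: f x).

Definition bounded_linear {K : numFieldType} {X Y : normedModType K} (f : X -> Y) :=
  linear_map f /\ exists M : K, 0 <= M /\ forall x, `|f x| <= M * `|x|.

Definition bounded_linear_by {K : numFieldType} {X Y : normedModType K}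
  (f : X -> Y) (M : K) :=
  linear_map f /\ forall x, `|f x| <= M * `|x|.

Definition bilinear_map {K : numFieldType} {X Y Z : normedModType K}
  (m : X -> Y -> Z) :=
  (forall x x' y, m (x + x') y = m x y + m x' y) /\
  (forall (k : K) x y, m (k *: x) y = k *: m x y) /\
  (forall x y y', m x (y + y') = m x y + m x y') /\
  (forall (k : K) x y, m x (k *: y) = k *: m x y).

Definition bilinear_contr {K : numFieldType} {X Y Z : normedModType K}
  (m : X -> Y -> Z) :=
  bilinear_map m /\ forall x y, `|m x y| <= `|x| * `|y|.

(* (A, mul) is a Banach algebra (completeness comes from the type) *)
Definition banach_algebra {K : numFieldType} {A : completeNormedModType K}
  (mul : A -> A -> A) :=
  bilinear_contr mul /\ forall a b c, mul a (mul b c) = mul (mul a b) c.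

Definition banach_bimodule {K : numFieldType} {A X : completeNormedModType K}
  (mul : A -> A -> A) (l : A -> X -> X) (r : X -> A -> X) :=
  bilinear_contr l /\ bilinear_contr r /\
  (forall a b x, l (mul a b) x = l a (l b x)) /\
  (forall a b x, r x (mul a b) = r (r x a) b) /\
  (forall a b x, l a (r x b) = r (l a x) b).

Definition compatible_actions {K : numFieldType} {U A : completeNormedModType K}
  (mulU : U -> U -> U) (mulA : A -> A -> A) (lU : U -> A -> A) (rU : A -> U -> A) :=
  banach_bimodule mulU lU rU /\
  (forall al a b, lU al (mulA a b) = mulA (lU al a) b) /\
  (forall al a b, rU (mulA a b) al = mulA a (rU b al)).

Definition banach_AU_module {K : numFieldType} {U A X : completeNormedModType K}
  (mulU : U -> U -> U) (mulA : A -> A -> A)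
  (lUA : U -> A -> A) (rUA : A -> U -> A)
  (lA : A -> X -> X) (rA : X -> A -> X) (lU : U -> X -> X) (rU : X -> U -> X) :=
  banach_bimodule mulA lA rA /\ banach_bimodule mulU lU rU /\
  (forall al a x, lU al (lA a x) = lA (lUA al a) x) /\
  (forall al a x, lA a (lU al x) = lA (rUA a al) x) /\
  (forall al a x, lA a (rU x al) = rU (lA a x) al) /\
  (forall al a x, rA (rU x al) a = rA x (lUA al a)) /\
  (forall al a x, rA (lU al x) a = lU al (rA x a)) /\
  (forall al a x, rU (rA x a) al = rA x (rUA a al)).

Definition commutative_U_action {K : numFieldType} {U X : normedModType K}
  (lU : U -> X -> X) (rU : X -> U -> X) := forall al x, lU al x = rU x al.

(* (T, tens) is the projective tensor product A \hat\otimes A: tens is a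
   contractive bilinear map, and every bounded bilinear map phi from A x A
   into a Banach space with ||phi(a,b)|| <= M ||a|| ||b|| factors uniquely
   through a bounded linear map of norm <= M. *)
Definition proj_tensor_product {K : numFieldType} {A T : completeNormedModType K}
  (tens : A -> A -> T) :=
  bilinear_contr tens /\
  forall (Y : completeNormedModType K) (phi : A -> A -> Y) (M : K),
    0 <= M -> bilinear_map phi ->
    (forall a b, `|phi a b| <= M * `|a| * `|b|) ->
    exists L : T -> Y,
      bounded_linear_by L M /\ (forall a b, L (tens a b) = phi a b) /\
      forall L' : T -> Y, bounded_linear L' ->
        (forall a b, L' (tens a b) = phi a b) -> L' = L.

Definition subspace {K : numFieldType} {X : normedModType K} (S : set X) :=
  S 0 /\ (forall x y, S x -> S y -> S (x + y)) /\
  (forall (k : K) x, S x -> S (k *: x)).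

Definition closed_span {K : numFieldType} {X : normedModType K} (G : set X) : set X :=
  fun x => forall S : set X, closed S -> subspace S -> G `<=` S -> S x.

Definition closed_ideal_gen {K : numFieldType} {A : normedModType K}
  (mul : A -> A -> A) (G : set A) : set A :=
  fun x => forall S : set A, closed S -> subspace S ->
    (forall a s, S s -> S (mul a s) /\ S (mul s a)) -> G `<=` S -> S x.

(* q : X -> Y is the quotient map of X onto the quotient Banach space X/N
   (with the quotient norm) *)
Definition quotient_map {K : numFieldType} {X Y : normedModType K}
  (N : set X) (q : X -> Y) :=
  linear_map q /\ (forall y, exists x, q x = y) /\
  (forall x, q x = 0 <-> N x) /\
  (forall x, (forall y, N y -> `|q x| <= `|x + y|) /\
             (forall e : K, 0 < e -> exists y, N y /\ `|x + y| < `|q x| + e)).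

Definition directed {I : Type} (le : I -> I -> Prop) :=
  (exists i : I, True) /\ (forall i, le i i) /\
  (forall i j k, le i j -> le j k -> le i k) /\
  (forall i j, exists k, le i k /\ le j k).

Definition net_to0 {K : numFieldType} {I : Type} (le : I -> I -> Prop) (u : I -> K) :=
  forall e : K, 0 < e -> exists i0, forall i, le i0 i -> `|u i| < e.

Definition dual_elt {K : numFieldType} {X : normedModType K} (f : X -> K) :=
  (forall x y, f (x + y) = f x + f y) /\ (forall (k : K) x, f (k *: x) = k * f x) /\
  exists M : K, 0 <= M /\ forall x, `|f x| <= M * `|x|.

Definition dual_bounded_linear {K : numFieldType} {X Y : normedModType K}
  (Phi : (X -> K) -> (Y -> K)) :=
  (forall f, dual_elt f -> dual_elt (Phi f)) /\
  (forall f g, dual_elt f -> dual_elt g -> forall y,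
      Phi (fun x => f x + g x) y = Phi f y + Phi g y) /\
  (forall (k : K) f, dual_elt f -> forall y, Phi (fun x => k * f x) y = k * Phi f y) /\
  exists C : K, 0 <= C /\ forall f (M : K), dual_elt f -> 0 <= M ->
     (forall x, `|f x| <= M * `|x|) -> forall y, `|Phi f y| <= C * M * `|y|.

(* ---------- the three conditions of the theorem ----------
   Notation: A (product mulA) is the Banach algebra, U (= frak A) acts on A by
   lUA, rUA; Q = A \hat\otimes_U A with the A-actions lQ, rQ and U-actions
   lUQ, rUQ; qJ : A -> A/J is the quotient map, mulJ the product of A/J;
   omega : Q -> A/J is \tilde\omega_A.  Elements of A/J are written qJ b
   (qJ is onto); the canonical actions on A/J are
   a.(b+J) = ab+J, (b+J).a = ba+J, al.(b+J) = al.b+J, (b+J).al = b.al+J. *)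

Definition module_pseudo_amenable {K : numFieldType}
  {A Q AJ : normedModType K} (mulA : A -> A -> A)
  (qJ : A -> AJ) (mulJ : AJ -> AJ -> AJ) (omega : Q -> AJ)
  (lQ : A -> Q -> Q) (rQ : Q -> A -> Q) :=
  exists (I : Type) (le : I -> I -> Prop) (u : I -> Q),
    directed le /\
    (forall a, net_to0 le (fun j => `|mulJ (omega (u j)) (qJ a) - qJ a|) /\
               net_to0 le (fun j => `|mulJ (qJ a) (omega (u j)) - qJ a|)) /\
    (forall a, net_to0 le (fun j => `|lQ a (u j) - rQ (u j) a|)).

Definition cond_ii {K : numFieldType}
  {U A Q AJ : normedModType K} (mulA : A -> A -> A)
  (lUA : U -> A -> A) (rUA : A -> U -> A)
  (qJ : A -> AJ) (omega : Q -> AJ)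
  (lQ : A -> Q -> Q) (rQ : Q -> A -> Q) (lUQ : U -> Q -> Q) (rUQ : Q -> U -> Q) :=
  exists (I : Type) (le : I -> I -> Prop) (S : I -> AJ -> Q),
    directed le /\
    (forall l, bounded_linear (S l)) /\
    (forall a b, net_to0 le (fun l => `|S l (qJ (mulA a b)) - lQ a (S l (qJ b))|)) /\
    (forall a b, net_to0 le (fun l => `|S l (qJ (mulA b a)) - rQ (S l (qJ b)) a|)) /\
    (forall al b, net_to0 le (fun l => `|S l (qJ (lUA al b)) - lUQ al (S l (qJ b))|)) /\
    (forall al b, net_to0 le (fun l => `|S l (qJ (rUA b al)) - rUQ (S l (qJ b)) al|)) /\
    (forall a, net_to0 le (fun l => `|omega (S l (qJ a)) - qJ a|)).

(* (iii).  Dual actions: for f in X^*, (a.f)(x) = f(x.a), (f.a)(x) = f(a.x),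
   and likewise for U.  Weak* convergence is pointwise convergence. *)
Definition cond_iii {K : numFieldType}
  {U A Q AJ : normedModType K} (mulA : A -> A -> A)
  (lUA : U -> A -> A) (rUA : A -> U -> A)
  (qJ : A -> AJ) (omega : Q -> AJ)
  (lQ : A -> Q -> Q) (rQ : Q -> A -> Q) (lUQ : U -> Q -> Q) (rUQ : Q -> U -> Q) :=
  exists (I : Type) (le : I -> I -> Prop) (T : I -> (Q -> K) -> (AJ -> K)),
    directed le /\
    (forall l, dual_bounded_linear (T l)) /\
    (forall a f, dual_elt f -> forall b, net_to0 le (fun l =>
        T l (fun x => f (rQ x a)) (qJ b) - T l f (qJ (mulA b a)))) /\
    (forall a f, dual_elt f -> forall b, net_to0 le (fun l =>
        T l (fun x => f (lQ a x)) (qJ b) - T l f (qJ (mulA a b)))) /\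
    (forall al f, dual_elt f -> forall b, net_to0 le (fun l =>
        T l (fun x => f (rUQ x al)) (qJ b) - T l f (qJ (rUA b al)))) /\
    (forall al f, dual_elt f -> forall b, net_to0 le (fun l =>
        T l (fun x => f (lUQ al x)) (qJ b) - T l f (qJ (lUA al b)))) /\
    (* T l \o omega^* --> id in the weak* operator topology *)
    (forall phi, dual_elt phi -> forall b, net_to0 le (fun l =>
        T l (fun x => phi (omega x)) (qJ b) - phi (qJ b))).

Definition has_central_approx_identity {K : numFieldType} {A AJ : normedModType K}
  (qJ : A -> AJ) (mulJ : AJ -> AJ -> AJ) :=
  exists (I : Type) (le : I -> I -> Prop) (e : I -> AJ),
    directed le /\
    (forall l c, mulJ (e l) c = mulJ c (e l)) /\
    (forall a, net_to0 le (fun l => `|mulJ (e l) (qJ a) - qJ a|) /\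
               net_to0 le (fun l => `|mulJ (qJ a) (e l) - qJ a|)).

(* (i) => (ii): if (u_j) witnesses pseudo-amenability, S_j (a + J) := a.u_j is
   well defined because J annihilates A \hat\otimes_U A, and it is a module
   approximate morphism with omega (S_j (a + J)) -> a + J.
   (ii) => (iii): take the transposes T_l f := f \o S_l.
   Given a central approximate identity (e_k) of A/J, both (ii) and (iii) yield
   approximate diagonals: for every finite F and eps > 0 some u such that
   omega u is an eps-identity on F and a.u is eps-close to u.a for a in F.
   Indexed by (F, eps) they witness pseudo-amenability.  From (ii) take
   u = S_l (e_k) for suitable k and l.  From (iii) argue by Hahn-Banach
   separation on Q x C: if no such u existed, the functional (u, t) |-> eps t
   would be dominated by the sum over a in F of the norms of the defects
   a.u - u.a, omega(u)(a + J) - t (a + J) and (a + J)omega(u) - t (a + J);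
   splitting it into functionals that factor through these defects contradicts
   the convergence of T_l \o omega^* at the central elements e_k. *)

From mathcomp Require Import all_boot all_order all_algebra.
From mathcomp Require Import all_classical all_reals all_analysis.
From mathcomp Require Import complex.
From mathcomp Require Import ring lra.
Import Order.TTheory GRing.Theory Num.Theory.
Import numFieldNormedType.Exports.
Local Open Scope ring_scope.
Local Open Scope classical_set_scope.
Set Implicit Arguments.
Unset Strict Implicit.
Unset Printing Implicit Defensive.

Section RealEmbedding.
Variable R : realType.
Implicit Types (x y z : R[i]) (r s : R).

Definition rc r : R[i] := (r%:C)%C.

Lemma rcD r s : rc (r + s) = rc r + rc s. Proof. exact: rmorphD. Qed.
Lemma rcM r s : rc (r * s) = rc r * rc s. Proof. exact: rmorphM. Qed.
Lemma rcN r : rc (- r) = - rc r. Proof. exact: rmorphN. Qed.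
Lemma rc0 : rc 0 = 0. Proof. exact: rmorph0. Qed.
Lemma rc1 : rc 1 = 1. Proof. exact: rmorph1. Qed.
Lemma rc_inj : injective rc. Proof. by move=> r s []. Qed.
Lemma rc_le r s : (rc r <= rc s) = (r <= s). Proof. exact: lecR. Qed.
Lemma rc_lt r s : (rc r < rc s) = (r < s). Proof. exact: ltcR. Qed.
Lemma rc_ge0 r : (0 <= rc r) = (0 <= r). Proof. by rewrite -rc0 rc_le. Qed.
Lemma rc_gt0 r : (0 < rc r) = (0 < r). Proof. by rewrite -rc0 rc_lt. Qed.

Lemma rc_Re_real z : z \is Num.real -> rc (complex.Re z) = z.
Proof. exact: RRe_real. Qed.
Lemma rc_Re_le_norm z : rc (complex.Re z) <= `|z|.
Proof.
apply: le_trans (normc_ge_Re z).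
by change (rc (complex.Re z) <= rc `|complex.Re z|); rewrite rc_le ler_norm.
Qed.
Lemma ReD z1 z2 : complex.Re (z1 + z2) = complex.Re z1 + complex.Re z2.
Proof. by case: z1; case: z2. Qed.
Lemma Re_rcM r z : complex.Re (rc r * z) = r * complex.Re z.
Proof. by case: z => a b /=; rewrite mul0r subr0. Qed.
Lemma Re_rc_subi r s : complex.Re (rc r - 'i%C * rc s) = r.
Proof. by rewrite /= !mul0r !mul1r subr0 oppr0 addr0. Qed.

Lemma scale_rcA (V : lmodType R[i]) r s (v : V) : rc r *: (rc s *: v) = rc (r * s) *: v.
Proof. by rewrite scalerA rcM. Qed.
Lemma scale_rcK (V : lmodType R[i]) r (v : V) : r != 0 -> rc r *: (rc r^-1 *: v) = v.
Proof. by move=> r0; rewrite scale_rcA mulfV // rc1 scale1r. Qed.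

End RealEmbedding.

(** * The Hahn-Banach theorem *)

Section RealHahnBanach.
Variables (R : realType) (V : lmodType R[i]) (p : V -> R).
Hypothesis p_add : forall x y, p (x + y) <= p x + p y.
Hypothesis p_scale : forall (r : R) x, 0 <= r -> p (rc r *: x) = r * p x.

Definition real_subspace (D : set V) :=
  D 0 /\ (forall x y, D x -> D y -> D (x + y)) /\ (forall r x, D x -> D (rc r *: x)).
Definition real_linear_on (D : set V) (f : V -> R) :=
  (forall x y, D x -> D y -> f (x + y) = f x + f y) /\
  (forall r x, D x -> f (rc r *: x) = r * f x).

Variables (W : set V) (f0 : V -> R).

Definition dominated_ext (e : set V * (V -> R)) :=
  [/\ real_subspace e.1, W `<=` e.1, real_linear_on e.1 e.2,
      forall w, W w -> e.2 w = f0 w & forall x, e.1 x -> e.2 x <= p x].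
Definition extends (e1 e2 : set V * (V -> R)) :=
  e1.1 `<=` e2.1 /\ forall x, e1.1 x -> e1.2 x = e2.2 x.

Lemma real_subspaceN D x : real_subspace D -> D x -> D (- x).
Proof. by move=> [_ [_ DZ]] Dx; rewrite -scaleN1r -rc1 -rcN; apply: DZ. Qed.

Section OneStep.
Variables (D : set V) (f : V -> R) (x : V).
Hypotheses (Hext : dominated_ext (D, f)) (Dx : ~ D x).

(* The value [c] of the extension at [x] must lie between [f d - p (d - x)]
   and [p (d' + x) - f d'] for all [d, d'] in [D]; take the supremum. *)
Let c := sup [set y | exists2 d, D d & y = f d - p (d - x)].

Lemma extension_gap d d' : D d -> D d' -> f d - p (d - x) <= p (d' + x) - f d'.
Proof.
case: Hext => [[_ [DD _]] _ [fD _] _ fp] /= Dd Dd'.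
have : f d + f d' <= p (d - x) + p (d' + x).
  rewrite -fD //; apply: le_trans (fp _ (DD _ _ Dd Dd')) _.
  by have := p_add (d - x) (d' + x); rewrite addrACA addNr addr0.
lra.
Qed.

Lemma gap_le_sup d : D d -> f d - p (d - x) <= c.
Proof.
case: Hext => [[D0 _] _ _ _ _] Dd; apply: ub_le_sup; last by exists d.
by exists (p (0 + x) - f 0) => _ [d' Dd' ->]; apply: extension_gap.
Qed.

Lemma sup_le_gap d' : D d' -> c <= p (d' + x) - f d'.
Proof.
case: Hext => [[D0 _] _ _ _ _] Dd'; apply: ge_sup; first by exists (f 0 - p (0 - x)), 0.
by move=> _ [d Dd ->]; apply: extension_gap.
Qed.

Lemma adjoin_decomp_uniq d1 d2 t1 t2 : D d1 -> D d2 ->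
  d1 + rc t1 *: x = d2 + rc t2 *: x -> t1 = t2 /\ d1 = d2.
Proof.
case: Hext => HD _ _ _ _ Dd1 Dd2 E.
have Ht : t1 = t2.
  apply/eqP; apply/negP => /negP ne.
  have h : rc (t1 - t2) *: x = d2 - d1.
    apply/eqP; rewrite rcD rcN scalerDl scaleNr subr_eq addrAC -E.
    by rewrite (addrC d1) addrK.
  have : D (rc (t1 - t2)^-1 *: (d2 - d1)).
    by apply: HD.2.2; apply: HD.2.1 => //; apply: real_subspaceN.
  by rewrite -h scale_rcA mulVf ?subr_eq0 // rc1 scale1r.
by subst t1; split=> //; apply: addIr E.
Qed.

Definition adjoin_dom := [set v | exists d t, D d /\ v = d + rc t *: x].
Definition adjoin_fun (v : V) : R :=
  if pselect (exists dt : V * R, D dt.1 /\ v = dt.1 + rc dt.2 *: x) is left H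
  then let dt := sval (cid H) in f dt.1 + dt.2 * c else 0.

Lemma adjoin_funE d t : D d -> adjoin_fun (d + rc t *: x) = f d + t * c.
Proof.
move=> Dd; rewrite /adjoin_fun; case: pselect => [H|[]]; last by exists (d, t).
case: cid => [[d1 t1] /= [Dd1 E]].
by have [-> ->] := adjoin_decomp_uniq Dd1 Dd (esym E).
Qed.

Lemma adjoin_fun_dom d : D d -> adjoin_fun d = f d.
Proof. by move=> Dd; have := adjoin_funE 0 Dd; rewrite rc0 scale0r addr0 mul0r addr0. Qed.

(* Dominance on [d + t x] reduces, after scaling by [|t|], to the two bounds on [c]. *)
Lemma adjoin_fun_le d t : D d -> f d + t * c <= p (d + rc t *: x).
Proof.
case: Hext => /= [[_ [_ DZ]] _ [_ fZ] _ fp] Dd.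
have [->|tn0] := eqVneq t 0; first by rewrite rc0 scale0r addr0 mul0r addr0 fp.
have [tpos|tneg] := ltP 0 t.
  set d1 := rc t^-1 *: d; have Dd1 : D d1 by apply: DZ.
  have hd : d = rc t *: d1 by rewrite /d1 scale_rcK.
  have e1 : f d = t * f d1 by rewrite hd fZ.
  have e2 : p (d + rc t *: x) = t * p (d1 + x) by rewrite hd -scalerDr p_scale // ltW.
  by rewrite e1 e2; have := ler_wpM2l (ltW tpos) (sup_le_gap Dd1); rewrite mulrBr; lra.
have [s spos ->] : exists2 s, 0 < s & t = - s.
  by exists (- t); rewrite ?opprK // oppr_gt0 lt_neqAle tn0 tneg.
set d1 := rc s^-1 *: d; have Dd1 : D d1 by apply: DZ.
have hd : d = rc s *: d1 by rewrite /d1 scale_rcK // gt_eqF.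
have e1 : f d = s * f d1 by rewrite hd fZ.
have e2 : p (d + rc (- s) *: x) = s * p (d1 - x).
  by rewrite hd rcN scaleNr -scalerN -scalerDr p_scale // ltW.
by rewrite e1 e2; have := ler_wpM2l (ltW spos) (gap_le_sup Dd1); rewrite mulrBr; lra.
Qed.

Lemma adjoin_dominated_ext : dominated_ext (adjoin_dom, adjoin_fun).
Proof.
case: Hext => /= [[D0 [DD DZ]] WD [fD fZ] fW fp]; split => /=.
- split; first by exists 0, 0; rewrite rc0 scale0r addr0.
  split.
    move=> _ _ [d1 [t1 [Dd1 ->]]] [d2 [t2 [Dd2 ->]]].
    by exists (d1 + d2), (t1 + t2); rewrite rcD scalerDl addrACA; split => //; apply: DD.
  move=> r _ [d [t [Dd ->]]].
  by exists (rc r *: d), (r * t); rewrite scalerDr scale_rcA; split => //; apply: DZ.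
- by move=> w Ww; exists w, 0; rewrite rc0 scale0r addr0; split => //; apply: WD.
- split.
    move=> _ _ [d1 [t1 [Dd1 ->]]] [d2 [t2 [Dd2 ->]]].
    rewrite addrACA -scalerDl -rcD !adjoin_funE //; last exact: DD.
    by rewrite fD // mulrDl addrACA.
  move=> r _ [d [t [Dd ->]]].
  rewrite scalerDr scale_rcA !adjoin_funE //; last exact: DZ.
  by rewrite fZ // mulrDr mulrA.
- by move=> w Ww; rewrite adjoin_fun_dom ?fW //; apply: WD.
- by move=> _ [d [t [Dd ->]]]; rewrite adjoin_funE ?adjoin_fun_le.
Qed.

Lemma adjoin_extends : extends (D, f) (adjoin_dom, adjoin_fun).
Proof.
split=> [d Dd|d Dd] /=; last by rewrite adjoin_fun_dom.
by exists d, 0; rewrite rc0 scale0r addr0.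
Qed.

Lemma adjoin_dom_x : adjoin_dom x.
Proof. by case: Hext => [[D0 _] _ _ _ _]; exists 0, 1; rewrite rc1 scale1r add0r. Qed.

End OneStep.

Lemma dominated_ext_chain_ub (C : set (set V * (V -> R))) :
  (exists e, C e) -> (forall e, C e -> dominated_ext e) ->
  (forall e1 e2, C e1 -> C e2 -> extends e1 e2 \/ extends e2 e1) ->
  exists2 u, dominated_ext u & forall e, C e -> extends e u.
Proof.
move=> [e0 Ce0] Cext Ctot.
pose Du := [set y | exists e, C e /\ e.1 y].
pose fu (y : V) : R :=
  if pselect (exists e, C e /\ e.1 y) is left H then (sval (cid H)).2 y else 0.
have fuE e y : C e -> e.1 y -> fu y = e.2 y.
  move=> Ce ey; rewrite /fu; case: pselect => [H|[]]; last by exists e.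
  case: cid => e' [Ce' e'y] /=.
  by case: (Ctot e' e Ce' Ce) => -[_ h]; rewrite h.
have common y z : Du y -> Du z -> exists e, [/\ C e, e.1 y & e.1 z].
  move=> [e [Ce ey]] [e' [Ce' e'z]].
  case: (Ctot e e' Ce Ce') => -[sub _]; first by exists e'; split => //; apply: sub.
  by exists e; split => //; apply: sub.
exists (Du, fu); last by move=> e Ce; split => y ey /=; [exists e | rewrite (fuE e)].
split => /=.
- split; first by exists e0; split => //; case: (Cext _ Ce0) => [[]].
  split.
    move=> y z /common/[apply] -[e [Ce ey ez]].
    by exists e; split => //; case: (Cext _ Ce) => [[_ [DD _]] _ _ _ _]; apply: DD.
  move=> r y [e [Ce ey]]; exists e; split => //.
  by case: (Cext _ Ce) => [[_ [_ DZ]] _ _ _ _]; apply: DZ.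
- by move=> w Ww; exists e0; split => //; case: (Cext _ Ce0) => _ WD _ _ _; apply: WD.
- split.
    move=> y z /common/[apply] -[e [Ce ey ez]].
    case: (Cext _ Ce) => [[_ [DD _]] _ [fD _] _ _].
    by rewrite !(fuE e) ?fD //; apply: DD.
  move=> r y [e [Ce ey]]; case: (Cext _ Ce) => [[_ [_ DZ]] _ [_ fZ] _ _].
  by rewrite !(fuE e) ?fZ //; apply: DZ.
- move=> w Ww; case: (Cext _ Ce0) => _ WD _ fW _.
  by rewrite (fuE e0) ?fW //; apply: WD.
- by move=> y [e [Ce ey]]; rewrite (fuE e) //; case: (Cext _ Ce) => _ _ _ _; apply.
Qed.

Hypotheses (HW : real_subspace W) (Hf0 : real_linear_on W f0)
  (f0_le : forall w, W w -> f0 w <= p w).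

Theorem real_hahn_banach : exists F : V -> R,
  [/\ forall x y, F (x + y) = F x + F y, forall r x, F (rc r *: x) = r * F x,
      forall w, W w -> F w = f0 w & forall x, F x <= p x].
Proof.
pose T := {e | dominated_ext e}.
pose le : rel T := fun s t => `[< extends (sval s) (sval t) >].
have ext0 : dominated_ext (W, f0) by split; [| move=> w | | |].
have [] := @ZL_preorder T (exist _ _ ext0) le.
- by move=> t; apply/asboolP; split.
- move=> r s t /asboolP [h1 h2] /asboolP [h3 h4]; apply/asboolP.
  by split=> [y /h1 /h3 //|y ry]; rewrite h2 // h4 //; apply: h1.
- move=> C Ctot; have [[t0 Ct0]|C0] := pselect (exists t, C t); last first.
    by exists (exist _ _ ext0) => t Ct; case: C0; exists t.
  have [|||u ext_u ub] := @dominated_ext_chain_ub (sval @` C).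
  + by exists (sval t0), t0.
  + by move=> _ [t _ <-]; apply: svalP.
  + move=> _ _ [s Cs <-] [t Ct <-].
    by case: (Ctot s t Cs Ct) => /asboolP; [left|right].
  by exists (exist _ _ ext_u) => t Ct; apply/asboolP; apply: ub; exists t.
move=> [[D f] ext_f] /= fmax.
have Dall y : D y.
  apply: contrapT => Dy.
  have /fmax : le (exist _ _ ext_f) (exist _ _ (adjoin_dominated_ext ext_f Dy)).
    by apply/asboolP; apply: adjoin_extends.
  by move=> /asboolP /= [sub _]; apply: Dy; apply: sub; exact: adjoin_dom_x ext_f.
case: (ext_f) => _ _ [fD fZ] fW fp; exists f; split => // [x y|r x|x].
- exact: fD.
- exact: fZ.
- exact: fp.
Qed.

End RealHahnBanach.

Section RealValuedNorms.
Variable R : realType.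

Definition rnorm {X : normedModType R[i]} (x : X) : R := complex.Re `|x|.
Definition cabs (c : R[i]) : R := complex.Re `|c|.

Lemma rnormE (X : normedModType R[i]) (x : X) : rc (rnorm x) = `|x|.
Proof. exact: rc_Re_real (normr_real x). Qed.
Lemma cabsE (c : R[i]) : rc (cabs c) = `|c|.
Proof. exact: rc_Re_real (normr_real c). Qed.

Lemma rnorm_ge0 (X : normedModType R[i]) (x : X) : 0 <= rnorm x.
Proof. by rewrite -rc_ge0 rnormE. Qed.
Lemma rnormD (X : normedModType R[i]) (x y : X) : rnorm (x + y) <= rnorm x + rnorm y.
Proof. by rewrite -rc_le rcD !rnormE ler_normD. Qed.
Lemma rnormN (X : normedModType R[i]) (x : X) : rnorm (- x) = rnorm x.
Proof. by rewrite /rnorm normrN. Qed.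
Lemma rnorm_eq0 (X : normedModType R[i]) (x : X) : (rnorm x == 0) = (x == 0).
Proof. by rewrite -(inj_eq (@rc_inj R)) rnormE rc0 normr_eq0. Qed.

Lemma cabs_ge0 (c : R[i]) : 0 <= cabs c.
Proof. by rewrite -rc_ge0 cabsE. Qed.
Lemma cabsD (c d : R[i]) : cabs (c + d) <= cabs c + cabs d.
Proof. by rewrite -rc_le rcD !cabsE ler_normD. Qed.
Lemma cabsN (c : R[i]) : cabs (- c) = cabs c.
Proof. by rewrite /cabs normrN. Qed.
Lemma cabsM (c d : R[i]) : cabs (c * d) = cabs c * cabs d.
Proof. by apply: rc_inj; rewrite rcM !cabsE normrM. Qed.
Lemma cabs_norm (X : normedModType R[i]) (x : X) : cabs `|x| = rnorm x.
Proof. by rewrite /cabs normr_id. Qed.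

Lemma rnorm_le (X Y : normedModType R[i]) (x : X) (y : Y) :
  (`|x| <= `|y|) = (rnorm x <= rnorm y).
Proof. by rewrite -!rnormE rc_le. Qed.
Lemma rnorm_leM (X Y Z : normedModType R[i]) (x : X) (y : Y) (z : Z) :
  (`|x| <= `|y| * `|z|) = (rnorm x <= rnorm y * rnorm z).
Proof. by rewrite -!rnormE -rcM rc_le. Qed.
Lemma rnorm_leMc (X Y : normedModType R[i]) (x : X) (M : R[i]) (y : Y) :
  0 <= M -> (`|x| <= M * `|y|) = (rnorm x <= complex.Re M * rnorm y).
Proof. by move=> M0; rewrite -!rnormE -{1}(rc_Re_real (ger0_real M0)) -rcM rc_le. Qed.
Lemma cabs_leMc (X : normedModType R[i]) (c M : R[i]) (y : X) :
  0 <= M -> (`|c| <= M * `|y|) = (cabs c <= complex.Re M * rnorm y).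
Proof. by move=> M0; rewrite -cabsE -rnormE -{1}(rc_Re_real (ger0_real M0)) -rcM rc_le. Qed.
Lemma Re_ge0 (M : R[i]) : 0 <= M -> 0 <= complex.Re M.
Proof. by move=> M0; rewrite -rc_ge0 rc_Re_real // ger0_real. Qed.

End RealValuedNorms.

Section Seminorms.
Variables (R : realType) (V : lmodType R[i]).

Definition seminorm (p : V -> R) :=
  (forall x y, p (x + y) <= p x + p y) /\
  (forall (c : R[i]) x, rc (p (c *: x)) = `|c| * rc (p x)).
Definition complex_linear (g : V -> R[i]) :=
  (forall x y, g (x + y) = g x + g y) /\ (forall c x, g (c *: x) = c * g x).

Lemma seminorm_scale_pos p r x : seminorm p -> 0 <= r -> p (rc r *: x) = r * p x.
Proof.
move=> [_ pZ] r0; apply: rc_inj; rewrite pZ rcM; congr (_ * _).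
by rewrite ger0_norm // rc_ge0.
Qed.

Lemma seminorm0 p : seminorm p -> p 0 = 0.
Proof. by move=> [_ pZ]; apply: rc_inj; rewrite -(scale0r (0 : V)) pZ normr0 mul0r rc0. Qed.

Lemma seminorm_ge0 p x : seminorm p -> 0 <= p x.
Proof.
move=> sp; have [pD pZ] := sp.
have hN : p (- x) = p x by apply: rc_inj; rewrite -scaleN1r pZ normrN normr1 mul1r.
by have := pD x (- x); rewrite subrr seminorm0 // hN; lra.
Qed.

Lemma seminormD p1 p2 : seminorm p1 -> seminorm p2 -> seminorm (fun v => p1 v + p2 v).
Proof.
move=> [h1 z1] [h2 z2]; split => [v w|c v]; first by have := h1 v w; have := h2 v w; lra.
by rewrite !rcD z1 z2 mulrDr.
Qed.

Lemma seminorm_rnorm (X : normedModType R[i]) (L : V -> X) :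
  (forall v w, L (v + w) = L v + L w) -> (forall c v, L (c *: v) = c *: L v) ->
  seminorm (fun v => rnorm (L v)).
Proof.
move=> LD LZ; split => [v w|c v]; first by rewrite LD rnormD.
by rewrite LZ !rnormE normrZ.
Qed.

Lemma seminorm_zero : seminorm (fun _ => 0).
Proof. by split => [v w|c v]; rewrite ?addr0 // rc0 mulr0. Qed.

End Seminorms.

Section Complexify.
Variables (R : realType) (V : lmodType R[i]) (Phi : V -> R).
Hypotheses (PhiD : forall x y, Phi (x + y) = Phi x + Phi y)
  (PhiZ : forall r x, Phi (rc r *: x) = r * Phi x).

Definition complexify (v : V) : R[i] := rc (Phi v) - 'i%C * rc (Phi ('i%C *: v)).

Lemma complexifyD x y : complexify (x + y) = complexify x + complexify y.
Proof. by rewrite /complexify scalerDr !PhiD !rcD; ring. Qed.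

Lemma complexify_rc r x : complexify (rc r *: x) = rc r * complexify x.
Proof.
rewrite /complexify.
have -> : 'i%C *: (rc r *: x) = rc r *: ('i%C *: x) by rewrite !scalerA mulrC.
by rewrite !PhiZ !rcM; ring.
Qed.

Lemma complexify_i x : complexify ('i%C *: x) = 'i%C * complexify x.
Proof.
have ii : 'i%C * 'i%C = rc (-1) :> R[i] by rewrite -expr2 sqr_i rcN rc1.
rewrite /complexify scalerA ii PhiZ rcM rcN rc1.
apply/eqP; rewrite -subr_eq0; apply/eqP.
transitivity (rc (Phi ('i%C *: x)) * (1 + 'i%C ^+ 2)); first by ring.
by rewrite sqr_i subrr mulr0.
Qed.

Lemma complexify_linear : complex_linear complexify.
Proof.
split=> [|c x]; first exact: complexifyD.
rewrite [in LHS](complexE c) scalerDl complexifyD -scalerA complexify_i !complexify_rc.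
by rewrite [in RHS](complexE c); ring.
Qed.

Lemma Re_complexify x : complex.Re (complexify x) = Phi x.
Proof. exact: Re_rc_subi. Qed.

End Complexify.

(* Rotating [x] by the phase of [F x] makes [F x] real and leaves [p x] unchanged. *)
Lemma norm_le_of_Re_le (R : realType) (V : lmodType R[i]) (p : V -> R) (F : V -> R[i]) :
  seminorm p -> complex_linear F -> (forall x, complex.Re (F x) <= p x) ->
  forall x, `|F x| <= rc (p x).
Proof.
move=> sp [_ FZ] ReF x; have [Fx0|Fxn0] := eqVneq (F x) 0.
  by rewrite Fx0 normr0 rc_ge0 seminorm_ge0.
set z := F x; have nz : `|z| != 0 by rewrite normr_eq0.
pose c := (z^*)%C / `|z|.
have Fc : F (c *: x) = `|z|.
  rewrite FZ /c mulrAC (mulrC _ z) -sqr_normc.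
  by rewrite expr2 -mulrA mulfV // mulr1.
have nc : `|c| = 1 by rewrite /c normrM normcJ normfV normr_id mulfV.
have pc : p (c *: x) = p x by apply: rc_inj; rewrite sp.2 nc mul1r.
have -> : `|z| = rc (complex.Re (F (c *: x))) by rewrite Fc rc_Re_real ?normr_real.
by rewrite rc_le -pc.
Qed.

Section ComplexHahnBanach.
Variables (R : realType) (V : lmodType R[i]) (p : V -> R).
Hypothesis sp : seminorm p.
Variables (W : set V) (f0 : V -> R[i]).
Hypotheses (W0 : W 0) (WD : forall x y, W x -> W y -> W (x + y))
  (WZ : forall c x, W x -> W (c *: x)).
Hypotheses (f0D : forall x y, W x -> W y -> f0 (x + y) = f0 x + f0 y)
  (f0Z : forall c x, W x -> f0 (c *: x) = c * f0 x)
  (f0_le : forall w, W w -> `|f0 w| <= rc (p w)).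

Theorem complex_hahn_banach : exists F : V -> R[i],
  [/\ complex_linear F, forall w, W w -> F w = f0 w & forall x, `|F x| <= rc (p x)].
Proof.
have [] := @real_hahn_banach R V p sp.1 (fun r x => @seminorm_scale_pos _ _ p r x sp)
  W (fun w => complex.Re (f0 w)).
- by split => //; split => // r x Wx; apply: WZ.
- by split => [x y Wx Wy|r x Wx]; rewrite ?f0D ?f0Z // ?ReD ?Re_rcM.
- by move=> w Ww; rewrite -rc_le; apply: le_trans (rc_Re_le_norm _) (f0_le Ww).
move=> Phi [PhiD PhiZ PhiW Phi_le].
have lin := complexify_linear PhiD PhiZ.
exists (complexify Phi); split => // [w Ww|].
  rewrite /complexify !PhiW //; last exact: WZ.
  rewrite f0Z // (mulrC 'i%C (f0 w)) ReiNIm rcN mulrN opprK.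
  by rewrite [in RHS](complexE (f0 w)).
by apply: norm_le_of_Re_le => // x; rewrite Re_complexify.
Qed.

End ComplexHahnBanach.

(* Hahn-Banach on [V * V] with the seminorm [p1 v.1 + p2 v.2], extending [g] from the diagonal. *)
Lemma split_by_seminorms (R : realType) (V : lmodType R[i]) (p1 p2 : V -> R) (g : V -> R[i]) :
  seminorm p1 -> seminorm p2 -> complex_linear g ->
  (forall v, `|g v| <= rc (p1 v + p2 v)) ->
  exists g1 g2 : V -> R[i], [/\ complex_linear g1, complex_linear g2,
    forall v, g v = g1 v + g2 v,
    forall v, `|g1 v| <= rc (p1 v) & forall v, `|g2 v| <= rc (p2 v)].
Proof.
move=> sp1 sp2 [gD gZ] g_le.
pose p (w : (V * V)%type) := p1 w.1 + p2 w.2.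
have sp : seminorm p.
  split=> [[x1 x2] [y1 y2]|c [x1 x2]]; rewrite /p /=.
    by have := sp1.1 x1 y1; have := sp2.1 x2 y2; lra.
  by rewrite !rcD sp1.2 sp2.2 mulrDr.
have [] := @complex_hahn_banach R _ p sp (fun w => w.2 = w.1) (fun w => g w.1).
- by [].
- by move=> [x1 x2] [y1 y2] /= -> ->.
- by move=> c [x1 x2] /= ->.
- by move=> [x1 x2] [y1 y2] /= _ _; apply: gD.
- by move=> c [x1 x2] /= _; apply: gZ.
- by move=> [x1 x2] /= ->; apply: g_le.
move=> F [[FD FZ] FW F_le].
exists (fun x => F (x, 0)), (fun y => F (0, y)); split.
- split=> [x y|c x]; rewrite -?FD -?FZ; congr F => //=.
  + by rewrite -[RHS]/(x + y, 0 + 0) addr0.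
  + by rewrite -[RHS]/(c *: x, c *: 0) scaler0.
- split=> [x y|c x]; rewrite -?FD -?FZ; congr F => //=.
  + by rewrite -[RHS]/(0 + 0, x + y) addr0.
  + by rewrite -[RHS]/(c *: 0, c *: x) scaler0.
- move=> v; rewrite -FD -(FW (v, v)) //; congr F.
  by rewrite -[RHS]/(v + 0, 0 + v) addr0 add0r.
- by move=> v; have := F_le (v, 0); rewrite /p /= seminorm0 // addr0.
- by move=> v; have := F_le (0, v); rewrite /p /= seminorm0 // add0r.
Qed.

(* A functional dominated by [`|L v|] is constant on the fibres of [L], so it is
   defined on the range of [L] and extends to [X] by Hahn-Banach. *)
Lemma factor_through_dual (R : realType) (V : lmodType R[i]) (X : normedModType R[i])
  (L : V -> X) (g : V -> R[i]) :
  (forall x y, L (x + y) = L x + L y) -> (forall c x, L (c *: x) = c *: L x) ->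
  complex_linear g -> (forall v, `|g v| <= rc (rnorm (L v))) ->
  exists2 h : X -> R[i], dual_elt h & forall v, g v = h (L v).
Proof.
move=> LD LZ [gD gZ] g_le.
have sp : seminorm (@rnorm R X).
  by split=> [x y|c x]; rewrite ?rnormD // !rnormE normrZ.
pose W y := exists v, y = L v.
have gL v v' : L v = L v' -> g v = g v'.
  move=> E; apply/eqP; rewrite -subr_eq0 -normr_le0.
  have -> : g v - g v' = g (v - v') by rewrite gD -scaleN1r gZ mulN1r.
  by apply: le_trans (g_le _) _; rewrite rnormE -scaleN1r LD LZ E scaleN1r subrr normr0.
pose f0 (y : X) : R[i] := if pselect (W y) is left H then g (sval (cid H)) else 0.
have f0L v : f0 (L v) = g v.
  rewrite /f0; case: pselect => [H|[]]; last by exists v.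
  by case: cid => v' /= E; apply: gL.
have [] := @complex_hahn_banach R X _ sp W f0.
- by exists 0; rewrite -(scale0r (0 : V)) LZ scale0r.
- by move=> _ _ [v ->] [w ->]; exists (v + w); rewrite LD.
- by move=> c _ [v ->]; exists (c *: v); rewrite LZ.
- by move=> _ _ [v ->] [w ->]; rewrite -LD !f0L gD.
- by move=> c _ [v ->]; rewrite -LZ !f0L gZ.
- by move=> _ [v ->]; rewrite f0L g_le.
move=> F [[FD FZ] FW F_le].
exists F; last by move=> v; rewrite FW ?f0L //; exists v.
split => //; split => //; exists 1; split => // x.
by rewrite mul1r -[X in _ <= X]rnormE; apply: F_le.
Qed.

(** * Nets, bounded linear maps and functionals *)

Lemma addfun0 (X Y : zmodType) (f : X -> Y) :
  (forall x y, f (x + y) = f x + f y) -> f 0 = 0.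
Proof. by move=> fD; apply: (addrI (f 0)); rewrite -fD !addr0. Qed.
Lemma addfunB (X Y : zmodType) (f : X -> Y) :
  (forall x y, f (x + y) = f x + f y) -> forall x y, f (x - y) = f x - f y.
Proof.
move=> fD x y; rewrite fD; congr (_ + _).
by apply: (addrI (f y)); rewrite -fD !subrr addfun0.
Qed.

Section Nets.
Variable R : realType.

Definition eventually_small {I : Type} (le : I -> I -> Prop) (f : I -> R) :=
  forall e : R, 0 < e -> exists i0, forall i, le i0 i -> f i < e.

Variables (I : Type) (le : I -> I -> Prop).
Implicit Types (f g : I -> R) (u v : I -> R[i]).

Lemma net_to0_small u : net_to0 le u <-> eventually_small le (fun i => cabs (u i)).
Proof.
split => [h e e0|h e e0].
  have e0' : 0 < rc e by rewrite rc_gt0.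
  by have [i0 Hi] := h _ e0'; exists i0 => i /Hi; rewrite -cabsE rc_lt.
have e_real : e \is Num.real by apply: gtr0_real.
have e0' : 0 < complex.Re e by rewrite -rc_gt0 rc_Re_real.
have [i0 Hi] := h _ e0'.
by exists i0 => i /Hi; rewrite -rc_lt cabsE rc_Re_real.
Qed.

Lemma small_le f g : (forall i, f i <= g i) -> eventually_small le g -> eventually_small le f.
Proof.
by move=> fg h e e0; have [i0 Hi] := h e e0; exists i0 => i /Hi; apply: le_lt_trans.
Qed.

Lemma net_to0_of_small u g :
  (forall i, cabs (u i) <= g i) -> eventually_small le g -> net_to0 le u.
Proof. by move=> h hg; apply/net_to0_small; apply: small_le hg. Qed.

Lemma small_of_net_to0_norm (X : normedModType R[i]) (x : I -> X) :
  net_to0 le (fun i => `|x i|) -> eventually_small le (fun i => rnorm (x i)).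
Proof. by move=> /net_to0_small; apply: small_le => i; rewrite cabs_norm. Qed.

Lemma small_scale c f :
  0 <= c -> eventually_small le f -> eventually_small le (fun i => c * f i).
Proof.
move=> c0 hf e e0; have c1 : 0 < c + 1 by rewrite ltr_wpDl.
have [i0 Hi] := hf _ (divr_gt0 e0 c1); exists i0 => i /Hi /ltW h.
apply: le_lt_trans (ler_wpM2l c0 h) _.
by rewrite mulrA ltr_pdivrMr // mulrDr mulr1; lra.
Qed.

Hypothesis dir : directed le.

Lemma small0 : eventually_small le (fun _ => 0).
Proof. by case: dir => -[i0 _] _ e e0; exists i0. Qed.

Lemma net_to0_eq0 u : (forall i, u i = 0) -> net_to0 le u.
Proof. by move=> u0; apply: (net_to0_of_small _ small0) => i; rewrite u0 /cabs normr0. Qed.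

Lemma eventually_and (P1 P2 : I -> Prop) :
  (exists i0, forall i, le i0 i -> P1 i) -> (exists i0, forall i, le i0 i -> P2 i) ->
  exists i0, forall i, le i0 i -> P1 i /\ P2 i.
Proof.
case: dir => _ [_ [le_trans' le_dir]] [i1 H1] [i2 H2].
have [k [k1 k2]] := le_dir i1 i2.
by exists k => i ki; split; [apply: H1 | apply: H2]; apply: le_trans' ki.
Qed.

Lemma eventually_forall_seq (T : Type) (P : T -> I -> Prop) :
  (forall a, exists i0, forall i, le i0 i -> P a i) ->
  forall s : seq T, exists i0, forall i, le i0 i -> forall a, List.In a s -> P a i.
Proof.
move=> h; elim => [|a s IH]; first by case: dir => -[i0 _] _; exists i0.
have [i0 H] := eventually_and (h a) IH.
by exists i0 => i /H [Pa Ps] b /= [<- //|]; apply: Ps.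
Qed.

Lemma smallD f g :
  eventually_small le f -> eventually_small le g -> eventually_small le (fun i => f i + g i).
Proof.
move=> hf hg e e0; have e2 : 0 < e / 2 by rewrite divr_gt0.
have [i0 H] := eventually_and (hf _ e2) (hg _ e2).
by exists i0 => i /H [h1 h2]; lra.
Qed.

Lemma small_const_le0 c : eventually_small le (fun _ => c) -> c <= 0.
Proof.
move=> h; rewrite leNgt; apply/negP => c0.
by case: dir => _ [refl _]; have [i0 Hi] := h c c0; have := Hi i0 (refl i0); rewrite ltxx.
Qed.

Lemma net_to0_const (c : R[i]) : net_to0 le (fun _ => c) -> c = 0.
Proof.
move=> /net_to0_small /small_const_le0 c0; apply/eqP; rewrite -normr_le0 -cabsE.
by rewrite -(rc0 R) rc_le.
Qed.

Lemma net_to0D u v : net_to0 le u -> net_to0 le v -> net_to0 le (fun i => u i + v i).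
Proof.
move=> /net_to0_small hu /net_to0_small hv.
by apply: (net_to0_of_small _ (smallD hu hv)) => i; apply: cabsD.
Qed.

Lemma net_to0N u : net_to0 le u -> net_to0 le (fun i => - u i).
Proof. by move=> /net_to0_small hu; apply: (net_to0_of_small _ hu) => i; rewrite cabsN. Qed.

Lemma net_to0B u v : net_to0 le u -> net_to0 le v -> net_to0 le (fun i => u i - v i).
Proof. by move=> hu /net_to0N; apply: net_to0D. Qed.

End Nets.

Section BoundedMaps.
Variable R : realType.
Implicit Types X Y Z : normedModType R[i].

Lemma closed_approx X (S : set X) :
  (forall c, (forall e : R, 0 < e -> exists2 c', S c' & rnorm (c - c') < e) -> S c) ->
  closed S.
Proof.
move=> h; rewrite closedE => p Hp; apply: h => e e0; apply: contrapT => Hn; apply: Hp.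
have e0' : 0 < rc e by rewrite rc_gt0.
apply: filterS (nbhsx_ballx p (rc e) e0') => y.
by rewrite -ball_normE /= => hy Sy; apply: Hn; exists y; rewrite // -rc_lt rnormE.
Qed.

Lemma bounded_linearD X Y (f : X -> Y) :
  bounded_linear f -> forall x y, f (x + y) = f x + f y.
Proof. by case=> [[]]. Qed.
Lemma bounded_linearZ X Y (f : X -> Y) :
  bounded_linear f -> forall (k : R[i]) x, f (k *: x) = k *: f x.
Proof. by case=> [[]]. Qed.
Lemma bounded_linear_le X Y (f : X -> Y) :
  bounded_linear f -> exists M : R, 0 <= M /\ forall x, rnorm (f x) <= M * rnorm x.
Proof.
move=> [_ [M [M0 h]]]; exists (complex.Re M); split; first exact: Re_ge0.
by move=> x; rewrite -rnorm_leMc.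
Qed.
Lemma bounded_linear_of X Y (f : X -> Y) (M : R) :
  (forall x y, f (x + y) = f x + f y) -> (forall (k : R[i]) x, f (k *: x) = k *: f x) ->
  0 <= M -> (forall x, rnorm (f x) <= M * rnorm x) -> bounded_linear f.
Proof.
move=> fD fZ M0 h; split; first by split.
exists (rc M); split; first by rewrite rc_ge0.
by move=> x; rewrite rnorm_leMc ?rc_ge0.
Qed.

Lemma bounded_linear_comp X Y Z (f : Y -> Z) (g : X -> Y) :
  bounded_linear f -> bounded_linear g -> bounded_linear (fun x => f (g x)).
Proof.
move=> bf bg; have [Mf [Mf0 Hf]] := bounded_linear_le bf.
have [Mg [Mg0 Hg]] := bounded_linear_le bg.
apply: (@bounded_linear_of _ _ _ (Mf * Mg)); last 1 first.
- by move=> x; apply: le_trans (Hf _) _; rewrite -mulrA ler_wpM2l.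
- by move=> x y; rewrite (bounded_linearD bg) (bounded_linearD bf).
- by move=> k x; rewrite (bounded_linearZ bg) (bounded_linearZ bf).
- exact: mulr_ge0.
Qed.

Lemma bounded_linear_sub X Y (f g : X -> Y) :
  bounded_linear f -> bounded_linear g -> bounded_linear (fun x => f x - g x).
Proof.
move=> bf bg; have [Mf [Mf0 Hf]] := bounded_linear_le bf.
have [Mg [Mg0 Hg]] := bounded_linear_le bg.
apply: (@bounded_linear_of _ _ _ (Mf + Mg)); last 1 first.
- by move=> x; apply: le_trans (rnormD _ _) _; rewrite rnormN mulrDl lerD.
- by move=> x y; rewrite (bounded_linearD bf) (bounded_linearD bg) opprD addrACA.
- by move=> k x; rewrite (bounded_linearZ bf) (bounded_linearZ bg) scalerBr.
- exact: addr_ge0.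
Qed.

Lemma dual_eltD X (f : X -> R[i]) : dual_elt f -> forall x y, f (x + y) = f x + f y.
Proof. by case. Qed.
Lemma dual_eltZ X (f : X -> R[i]) : dual_elt f -> forall (k : R[i]) x, f (k *: x) = k * f x.
Proof. by case=> _ []. Qed.
Lemma dual_eltB X (f : X -> R[i]) : dual_elt f -> forall x y, f (x - y) = f x - f y.
Proof. by move=> /dual_eltD; apply: addfunB. Qed.
Lemma dual_elt_le X (f : X -> R[i]) :
  dual_elt f -> exists M : R, 0 <= M /\ forall x, cabs (f x) <= M * rnorm x.
Proof.
move=> [_ [_ [M [M0 h]]]]; exists (complex.Re M); split; first exact: Re_ge0.
by move=> x; rewrite -cabs_leMc.
Qed.
Lemma dual_elt_of X (f : X -> R[i]) (M : R) :
  (forall x y, f (x + y) = f x + f y) -> (forall (k : R[i]) x, f (k *: x) = k * f x) ->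
  0 <= M -> (forall x, cabs (f x) <= M * rnorm x) -> dual_elt f.
Proof.
move=> fD fZ M0 h; split => //; split => //.
exists (rc M); split; first by rewrite rc_ge0.
by move=> x; rewrite cabs_leMc ?rc_ge0.
Qed.

Lemma dual_elt_comp X Y (h : Y -> R[i]) (L : X -> Y) :
  dual_elt h -> bounded_linear L -> dual_elt (fun x => h (L x)).
Proof.
move=> dh bL; have [Mh [Mh0 Hh]] := dual_elt_le dh.
have [ML [ML0 HL]] := bounded_linear_le bL.
apply: (@dual_elt_of _ _ (Mh * ML)); last 1 first.
- by move=> x; apply: le_trans (Hh _) _; rewrite -mulrA ler_wpM2l.
- by move=> x y; rewrite (bounded_linearD bL) (dual_eltD dh).
- by move=> k x; rewrite (bounded_linearZ bL) (dual_eltZ dh).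
- exact: mulr_ge0.
Qed.

Lemma dual_elt_add X (f g : X -> R[i]) :
  dual_elt f -> dual_elt g -> dual_elt (fun x => f x + g x).
Proof.
move=> df dg; have [Mf [Mf0 Hf]] := dual_elt_le df; have [Mg [Mg0 Hg]] := dual_elt_le dg.
apply: (@dual_elt_of _ _ (Mf + Mg)); last 1 first.
- by move=> x; apply: le_trans (cabsD _ _) _; rewrite mulrDl lerD.
- by move=> x y; rewrite (dual_eltD df) (dual_eltD dg) addrACA.
- by move=> k x; rewrite (dual_eltZ df) (dual_eltZ dg) mulrDr.
- exact: addr_ge0.
Qed.

Lemma dual_elt_scale X (k : R[i]) (f : X -> R[i]) :
  dual_elt f -> dual_elt (fun x => k * f x).
Proof.
move=> df; have [Mf [Mf0 Hf]] := dual_elt_le df.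
apply: (@dual_elt_of _ _ (cabs k * Mf)); last 1 first.
- by move=> x; rewrite cabsM -mulrA ler_wpM2l ?cabs_ge0.
- by move=> x y; rewrite (dual_eltD df) mulrDr.
- by move=> c x; rewrite (dual_eltZ df) mulrCA.
- exact: mulr_ge0 (cabs_ge0 _) Mf0.
Qed.

Lemma dual_elt0 X : dual_elt (fun _ : X => 0 : R[i]).
Proof.
apply: (@dual_elt_of _ _ 0) => [x y|k x||x]; rewrite ?addr0 ?mulr0 //.
by rewrite mul0r /cabs normr0.
Qed.

End BoundedMaps.

(** * The quotient algebra A/J *)

Lemma frac_le (R : realType) (e x : R) : 0 < e -> 0 <= x -> e / (x + 1) * x <= e.
Proof.
move=> e0 x0; rewrite mulrAC ler_pdivrMr; last lra.
by apply: ler_wpM2l; lra.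
Qed.

Section BanachAlgebra.
Variables (R : realType) (A : completeNormedModType R[i]) (mulA : A -> A -> A).
Hypothesis HA : banach_algebra mulA.

Lemma mulADl x x' y : mulA (x + x') y = mulA x y + mulA x' y.
Proof. by case: HA => [[[h _] _] _]. Qed.
Lemma mulAZl (k : R[i]) x y : mulA (k *: x) y = k *: mulA x y.
Proof. by case: HA => [[[_ [h _]] _] _]. Qed.
Lemma mulADr x y y' : mulA x (y + y') = mulA x y + mulA x y'.
Proof. by case: HA => [[[_ [_ [h _]]] _] _]. Qed.
Lemma mulAZr (k : R[i]) x y : mulA x (k *: y) = k *: mulA x y.
Proof. by case: HA => [[[_ [_ [_ h]]] _] _]. Qed.
Lemma mulA_le x y : rnorm (mulA x y) <= rnorm x * rnorm y.
Proof. by case: HA => [[_ h] _]; rewrite -rnorm_leM. Qed.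
Lemma mulAA a b c : mulA a (mulA b c) = mulA (mulA a b) c.
Proof. by case: HA. Qed.

End BanachAlgebra.

Section QuotientAlgebra.
Variables (R : realType) (A AJ : completeNormedModType R[i]) (mulA : A -> A -> A).
Variables (G : set A) (qJ : A -> AJ) (mulJ : AJ -> AJ -> AJ).
Hypotheses (HA : banach_algebra mulA) (HqJ : quotient_map (closed_ideal_gen mulA G) qJ)
  (HmulJ : forall a b, mulJ (qJ a) (qJ b) = qJ (mulA a b)).
Local Notation J := (closed_ideal_gen mulA G).

Lemma qJD x y : qJ (x + y) = qJ x + qJ y.
Proof. by case: HqJ => [[]]. Qed.
Lemma qJZ (k : R[i]) x : qJ (k *: x) = k *: qJ x.
Proof. by case: HqJ => [[]]. Qed.
Lemma qJB x y : qJ (x - y) = qJ x - qJ y.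
Proof. exact: addfunB qJD x y. Qed.
Lemma qJ_onto y : exists x, qJ x = y.
Proof. by case: HqJ => _ []. Qed.
Lemma qJ_ker x : qJ x = 0 <-> J x.
Proof. by case: HqJ => _ [_ []]. Qed.
Lemma qJ_le x y : J y -> rnorm (qJ x) <= rnorm (x + y).
Proof. by case: HqJ => _ [_ [_ h]] Jy; rewrite -rnorm_le; apply: (h x).1. Qed.
Lemma qJ_approx x (e : R) : 0 < e -> exists2 y, J y & rnorm (x + y) < rnorm (qJ x) + e.
Proof.
case: HqJ => _ [_ [_ h]] e0; have e0' : 0 < rc e by rewrite rc_gt0.
have [y [Jy Hy]] := (h x).2 _ e0'.
by exists y; rewrite // -rc_lt rcD !rnormE.
Qed.

Lemma J_add x y : J x -> J y -> J (x + y).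
Proof. by move=> /qJ_ker hx /qJ_ker hy; apply/qJ_ker; rewrite qJD hx hy addr0. Qed.
Lemma J_mull a s : J s -> J (mulA a s).
Proof. by move=> Js S cS sS iS GS; apply: (iS a s (Js S cS sS iS GS)).1. Qed.
Lemma J_mulr a s : J s -> J (mulA s a).
Proof. by move=> Js S cS sS iS GS; apply: (iS a s (Js S cS sS iS GS)).2. Qed.

(* Choose representatives [a + y1], [b + y2] whose norms are [d]-close to the quotient norms. *)
Lemma qJ_mul_le a b : rnorm (qJ (mulA a b)) <= rnorm (qJ a) * rnorm (qJ b).
Proof.
apply/ler_addgt0Pr => e e0.
set p := rnorm (qJ a); set s := rnorm (qJ b).
have p0 : 0 <= p by apply: rnorm_ge0.
have s0 : 0 <= s by apply: rnorm_ge0.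
pose d := Num.min 1 (e / (p + s + 1)).
have d0 : 0 < d by rewrite lt_min ltr01 divr_gt0 //; lra.
have d1 : d <= 1 by rewrite ge_min lexx.
have de : d * (p + s + 1) <= e by rewrite -ler_pdivlMr ?ge_min ?lexx ?orbT //; lra.
have [y1 Jy1 H1] := qJ_approx a d0; have [y2 Jy2 H2] := qJ_approx b d0.
have Jz : J (mulA y1 b + mulA a y2 + mulA y1 y2).
  exact: J_add (J_add (J_mulr b Jy1) (J_mull a Jy2)) (J_mull y1 Jy2).
have E : mulA (a + y1) (b + y2) = mulA a b + (mulA y1 b + mulA a y2 + mulA y1 y2).
  by rewrite (mulADl HA) !(mulADr HA) -!addrA; congr (_ + _); rewrite addrCA.
have := qJ_le (mulA a b) Jz; rewrite -E => h.
have := mulA_le HA (a + y1) (b + y2).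
have : rnorm (a + y1) * rnorm (b + y2) <= (p + d) * (s + d).
  by apply: ler_pM; [exact: rnorm_ge0 | exact: rnorm_ge0 | exact: ltW | exact: ltW].
have : (p + d) * (s + d) <= p * s + e.
  have -> : (p + d) * (s + d) = p * s + d * (p + s + d) by ring.
  by rewrite lerD2l; apply: le_trans de; apply: ler_wpM2l; [exact: ltW|lra].
lra.
Qed.

Lemma mulJ_le x y : rnorm (mulJ x y) <= rnorm x * rnorm y.
Proof. by have [a <-] := qJ_onto x; have [b <-] := qJ_onto y; rewrite HmulJ qJ_mul_le. Qed.

Lemma mulJDl x x' y : mulJ (x + x') y = mulJ x y + mulJ x' y.
Proof.
have [a <-] := qJ_onto x; have [a' <-] := qJ_onto x'; have [b <-] := qJ_onto y.
by rewrite -qJD !HmulJ (mulADl HA) qJD.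
Qed.
Lemma mulJZl (k : R[i]) x y : mulJ (k *: x) y = k *: mulJ x y.
Proof.
have [a <-] := qJ_onto x; have [b <-] := qJ_onto y.
by rewrite -qJZ !HmulJ (mulAZl HA) qJZ.
Qed.
Lemma mulJDr x y y' : mulJ x (y + y') = mulJ x y + mulJ x y'.
Proof.
have [a <-] := qJ_onto x; have [b <-] := qJ_onto y; have [b' <-] := qJ_onto y'.
by rewrite -qJD !HmulJ (mulADr HA) qJD.
Qed.
Lemma mulJZr (k : R[i]) x y : mulJ x (k *: y) = k *: mulJ x y.
Proof.
have [a <-] := qJ_onto x; have [b <-] := qJ_onto y.
by rewrite -qJZ !HmulJ (mulAZr HA) qJZ.
Qed.

Lemma mulJBl x x' y : mulJ (x - x') y = mulJ x y - mulJ x' y.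
Proof. exact: addfunB (fun x x' => mulJDl x x' y) x x'. Qed.
Lemma mulJBr x y y' : mulJ x (y - y') = mulJ x y - mulJ x y'.
Proof. exact: addfunB (mulJDr x) y y'. Qed.

Lemma mulJ_bounded_linear c : bounded_linear (mulJ c).
Proof.
apply: (@bounded_linear_of _ _ _ _ (rnorm c)); rewrite ?rnorm_ge0 //.
- exact: mulJDr.
- by move=> k y; apply: mulJZr.
- exact: mulJ_le.
Qed.
Lemma mulJr_bounded_linear c : bounded_linear (mulJ^~ c).
Proof.
apply: (@bounded_linear_of _ _ _ _ (rnorm c)); rewrite ?rnorm_ge0 //.
- by move=> x y; apply: mulJDl.
- by move=> k x; apply: mulJZl.
- by move=> x; rewrite mulrC mulJ_le.
Qed.

End QuotientAlgebra.

(** * The equivalences *)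

Section GeneralImplications.
Variable R : realType.

Lemma proj_tensor_ext (A T Y : completeNormedModType R[i]) (tens : A -> A -> T)
  (L1 L2 : T -> Y) :
  proj_tensor_product tens -> bounded_linear L1 -> bounded_linear L2 ->
  (forall a b, L1 (tens a b) = L2 (tens a b)) -> L1 = L2.
Proof.
move=> [[[tDl [tZl [tDr tZr]]] t_le] t_univ] bL1 bL2 E.
have [[L1D L1Z] [M [M0 L1_le]]] := bL1.
have [||L [_ [_ L_uniq]]] := t_univ Y (fun a b => L1 (tens a b)) M M0.
- by split; [|split; [|split]] => *; rewrite ?tDl ?tZl ?tDr ?tZr ?L1D ?L1Z.
- by move=> a b; rewrite -mulrA; apply: le_trans (L1_le _) (ler_wpM2l M0 (t_le a b)).
have -> := L_uniq L1 bL1 (fun a b => erefl).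
by apply/esym/L_uniq => // a b; rewrite E.
Qed.

Lemma dual_net_to0 (I : Type) (le : I -> I -> Prop) (X : normedModType R[i])
  (f : X -> R[i]) (g h : I -> X) :
  dual_elt f -> net_to0 le (fun l => `|g l - h l|) -> net_to0 le (fun l => f (h l) - f (g l)).
Proof.
move=> df /net_to0_small hn; have [M [M0 HM]] := dual_elt_le df.
apply: (net_to0_of_small _ (small_scale M0 hn)) => l.
by rewrite -(dual_eltB df) cabs_norm -rnormN opprB HM.
Qed.

Lemma dual_bounded_linear_precomp (X Y : normedModType R[i]) (S : Y -> X) :
  bounded_linear S -> dual_bounded_linear (fun (f : X -> R[i]) y => f (S y)).
Proof.
move=> bS; have [MS [MS0 HS]] := bounded_linear_le bS.
split; first by move=> f df; apply: dual_elt_comp.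
split=> //; split=> //.
exists (rc MS); split; first by rewrite rc_ge0.
move=> f M df M0 hM y; have MR := ger0_real M0.
have := hM (S y); rewrite -cabsE -rnormE -(rc_Re_real MR) -rcM rc_le => hf.
rewrite -rnormE -!rcM rc_le.
by apply: le_trans hf _; rewrite (mulrC MS) -mulrA ler_wpM2l ?Re_ge0.
Qed.

Section DualBoundedLinear.
Variables (X Y : normedModType R[i]) (Phi : (X -> R[i]) -> (Y -> R[i])).
Hypothesis HPhi : dual_bounded_linear Phi.

Lemma dual_bounded_linearD f g y : dual_elt f -> dual_elt g ->
  Phi (fun x => f x + g x) y = Phi f y + Phi g y.
Proof. by move=> df dg; case: HPhi => _ [h _]; apply: h. Qed.
Lemma dual_bounded_linearZ k f y : dual_elt f -> Phi (fun x => k * f x) y = k * Phi f y.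
Proof. by move=> df; case: HPhi => _ [_ [h _]]; apply: h. Qed.
Lemma dual_bounded_linear0 y : Phi (fun _ => 0) y = 0.
Proof.
have -> : (fun _ : X => 0 : R[i]) = (fun x => 0 * (fun _ : X => 0 : R[i]) x).
  by apply: funext => x; rewrite mul0r.
by rewrite dual_bounded_linearZ ?mul0r //; apply: dual_elt0.
Qed.
Lemma dual_bounded_linearB f g y : dual_elt f -> dual_elt g ->
  Phi (fun x => f x - g x) y = Phi f y - Phi g y.
Proof.
move=> df dg; have -> : (fun x => f x - g x) = (fun x => f x + (fun x => -1 * g x) x).
  by apply: funext => x; rewrite mulN1r.
by rewrite dual_bounded_linearD ?dual_bounded_linearZ ?mulN1r //; apply: dual_elt_scale.
Qed.

End DualBoundedLinear.

Lemma cond_iii_of_cond_ii (U A Q AJ : normedModType R[i]) (mulA : A -> A -> A)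
  (lUA : U -> A -> A) (rUA : A -> U -> A) (qJ : A -> AJ) (omega : Q -> AJ)
  (lQ : A -> Q -> Q) (rQ : Q -> A -> Q) (lUQ : U -> Q -> Q) (rUQ : Q -> U -> Q) :
  cond_ii mulA lUA rUA qJ omega lQ rQ lUQ rUQ ->
  cond_iii mulA lUA rUA qJ omega lQ rQ lUQ rUQ.
Proof.
move=> [I [le [S [dir [S_bl [Sl [Sr [SUl [SUr Somega]]]]]]]]].
exists I, le, (fun l f y => f (S l y)).
do 2 (split=> //); first by move=> l; apply: dual_bounded_linear_precomp.
do 4 (split; first by move=> ? f df b; apply: dual_net_to0).
move=> phi dphi b; apply: dual_net_to0 => //.
by move: (Somega b); congr net_to0; apply: funext => l; apply: distrC.
Qed.

Definition approx_diagonals {A Q AJ : normedModType R[i]} (qJ : A -> AJ)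
  (mulJ : AJ -> AJ -> AJ) (omega : Q -> AJ) (lQ : A -> Q -> Q) (rQ : Q -> A -> Q) :=
  forall (F : seq A) (eps : R), 0 < eps -> exists u : Q, forall a, List.In a F ->
    [/\ rnorm (mulJ (omega u) (qJ a) - qJ a) < eps,
        rnorm (mulJ (qJ a) (omega u) - qJ a) < eps & rnorm (lQ a u - rQ u a) < eps].

(* Index the approximate diagonals by pairs (finite set, precision), ordered
   by inclusion and refinement. *)
Lemma pseudo_amenable_of_approx (A Q AJ : normedModType R[i]) (mulA : A -> A -> A)
  (qJ : A -> AJ) (mulJ : AJ -> AJ -> AJ) (omega : Q -> AJ)
  (lQ : A -> Q -> Q) (rQ : Q -> A -> Q) :
  approx_diagonals qJ mulJ omega lQ rQ -> module_pseudo_amenable mulA qJ mulJ omega lQ rQ.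
Proof.
move=> h; pose eps (n : nat) : R := n.+1%:R^-1.
have eps0 n : 0 < eps n by rewrite invr_gt0 ltr0Sn.
pose I := (seq A * nat)%type.
pose le (i j : I) := (forall a, List.In a i.1 -> List.In a j.1) /\ (i.2 <= j.2)%N.
pose u (i : I) := sval (cid (h i.1 _ (eps0 i.2))).
have hu i a : List.In a i.1 -> _ := svalP (cid (h i.1 _ (eps0 i.2))) a.
have dir : directed le.
  split; first by exists ([::], 0%N).
  split; first by move=> i; split.
  split.
    by move=> i j k [h1 h2] [h3 h4]; split; [move=> a /h1 /h3|exact: leq_trans h4].
  move=> i j; exists (i.1 ++ j.1, maxn i.2 j.2).
  by split; split; rewrite ?leq_maxl ?leq_maxr // => a ai; apply: List.in_or_app; auto.
have ev a (e : R) : 0 < e -> exists i0, forall i, le i0 i -> [/\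
    rnorm (mulJ (omega (u i)) (qJ a) - qJ a) < e,
    rnorm (mulJ (qJ a) (omega (u i)) - qJ a) < e & rnorm (lQ a (u i) - rQ (u i) a) < e].
  move=> e0; exists ([:: a], Num.Def.truncn e^-1) => i [h1 h2].
  have [r1 r2 r3] := hu i a (h1 a (or_introl erefl)).
  have eps_e : eps i.2 < e.
    have hN : eps (Num.Def.truncn e^-1) < e.
      by rewrite /eps invf_plt ?posrE ?ltr0Sn // truncnS_gt.
    by apply: le_lt_trans hN; rewrite /eps lef_pV2 ?posrE ?ltr0Sn // ler_nat ltnS.
  by split; apply: lt_trans eps_e.
exists I, le, u; split => //; split => [a|a]; first split.
all: apply/net_to0_small => e /(ev a) [i0 Hi]; exists i0 => i /Hi [m1 m2 m3].
all: by rewrite cabs_norm.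
Qed.

End GeneralImplications.

Section PseudoAmenability.
Variables (R : realType)
  (U : completeNormedModType R[i]) (mulU : U -> U -> U)
  (A : completeNormedModType R[i]) (mulA : A -> A -> A)
  (lUA : U -> A -> A) (rUA : A -> U -> A)
  (T : completeNormedModType R[i]) (tens : A -> A -> T)
  (Q : completeNormedModType R[i]) (q : T -> Q)
  (AJ : completeNormedModType R[i]) (qJ : A -> AJ) (mulJ : AJ -> AJ -> AJ)
  (lQ : A -> Q -> Q) (rQ : Q -> A -> Q) (lUQ : U -> Q -> Q) (rUQ : Q -> U -> Q)
  (omega : Q -> AJ).
Local Notation J := (closed_ideal_gen mulA (fun x => exists a al b,
  x = mulA (rUA a al) b - mulA a (lUA al b))).
Hypotheses
  (HA : banach_algebra mulA)
  (Htens : proj_tensor_product tens)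
  (Hq : quotient_map
          (closed_span (fun t => exists a al b,
              t = tens (rUA a al) b - tens a (lUA al b))) q)
  (HqJ : quotient_map J qJ)
  (HmulJ : forall a b, mulJ (qJ a) (qJ b) = qJ (mulA a b))
  (HlQ : forall c, bounded_linear (lQ c) /\
           forall a b, lQ c (q (tens a b)) = q (tens (mulA c a) b))
  (HrQ : forall c, bounded_linear (fun x => rQ x c))
  (Homega : bounded_linear omega /\
           forall a b, omega (q (tens a b)) = qJ (mulA a b))
  (HQmod : banach_AU_module mulU mulA lUA rUA lQ rQ lUQ rUQ)
  (HQcomm : commutative_U_action lUQ rUQ).

Lemma lQDl c c' x : lQ (c + c') x = lQ c x + lQ c' x.
Proof. by case: HQmod => [[[[h _] _] _] _]. Qed.
Lemma lQZl (k : R[i]) c x : lQ (k *: c) x = k *: lQ c x.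
Proof. by case: HQmod => [[[[_ [h _]] _] _] _]. Qed.
Lemma lQDr c x x' : lQ c (x + x') = lQ c x + lQ c x'.
Proof. by case: HQmod => [[[[_ [_ [h _]]] _] _] _]. Qed.
Lemma lQ_le c x : rnorm (lQ c x) <= rnorm c * rnorm x.
Proof. by case: HQmod => [[[_ h] _] _]; rewrite -rnorm_leM. Qed.
Lemma lQM a b x : lQ (mulA a b) x = lQ a (lQ b x).
Proof. by case: HQmod => [[_ [_ [h _]]] _]. Qed.
Lemma lQ_rQ a x b : lQ a (rQ x b) = rQ (lQ a x) b.
Proof. by case: HQmod => [[_ [_ [_ [_ h]]]] _]. Qed.
Lemma lUQ_lQ al a x : lUQ al (lQ a x) = lQ (lUA al a) x.
Proof. by case: HQmod => [_ [_ [h _]]]. Qed.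
Lemma lQ_lUQ al a x : lQ a (lUQ al x) = lQ (rUA a al) x.
Proof. by case: HQmod => [_ [_ [_ [h _]]]]. Qed.
Lemma lQ_rUQ al a x : lQ a (rUQ x al) = rUQ (lQ a x) al.
Proof. by case: HQmod => [_ [_ [_ [_ [h _]]]]]. Qed.
Lemma lQBl c c' x : lQ (c - c') x = lQ c x - lQ c' x.
Proof. exact: addfunB (fun c c' => lQDl c c' x) c c'. Qed.
Lemma lQBr c x x' : lQ c (x - x') = lQ c x - lQ c x'.
Proof. exact: addfunB (lQDr c) x x'. Qed.

Lemma lQ_bounded_linear a : bounded_linear (lQ a). Proof. by case: (HlQ a). Qed.
Lemma omega_bounded_linear : bounded_linear omega. Proof. by case: Homega. Qed.

Lemma q_bounded_linear : bounded_linear q.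
Proof.
case: Hq => [[qD qZ] [_ [q0 qn]]].
apply: (@bounded_linear_of _ _ _ q 1 qD qZ ler01) => x; rewrite mul1r.
by have := (qn x).1 0 (proj1 (q0 0) (addfun0 qD)); rewrite addr0 rnorm_le.
Qed.

Lemma omega_lQ c x : omega (lQ c x) = mulJ (qJ c) (omega x).
Proof.
have [t <-] : exists t, q t = x by case: Hq => _ [].
suff E : (fun t => omega (lQ c (q t))) = (fun t => mulJ (qJ c) (omega (q t))).
  exact: (congr1 (@^~ t) E).
apply: proj_tensor_ext Htens _ _ _ => [||a b].
- exact: bounded_linear_comp omega_bounded_linear
    (bounded_linear_comp (lQ_bounded_linear c) q_bounded_linear).
- exact: bounded_linear_comp (mulJ_bounded_linear HA HqJ HmulJ _)
    (bounded_linear_comp omega_bounded_linear q_bounded_linear).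
- by case: (HlQ c) Homega => _ lQt [_ om] /=; rewrite lQt !om HmulJ mulAA.
Qed.

(* The generators [(a.al) b - a (al.b)] of [J] act as zero on [Q], since
   [(a.al).x = a.(al.x)]; by continuity so does all of [J]. *)
Lemma lQ_J c : J c -> forall x, lQ c x = 0.
Proof.
move=> Jc; apply: (Jc (fun c => forall x, lQ c x = 0)).
- apply: closed_approx => c0 h x; apply/eqP; rewrite -rnorm_eq0 eq_le rnorm_ge0 andbT.
  apply/ler_addgt0Pr => e e0; rewrite add0r; have x0 := rnorm_ge0 x.
  have [c' Sc' hc'] := h _ (divr_gt0 e0 (ltr_wpDl x0 ltr01)).
  have -> : lQ c0 x = lQ (c0 - c') x by rewrite lQBl Sc' subr0.
  apply: le_trans (lQ_le _ _) _; apply: le_trans (ler_wpM2r x0 (ltW hc')) _.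
  exact: frac_le.
- split; first by move=> x; rewrite (addfun0 (fun c c' => lQDl c c' x)).
  split; first by move=> a b ha hb x; rewrite lQDl ha hb addr0.
  by move=> k a ha x; rewrite lQZl ha scaler0.
- move=> a s hs; split => x; rewrite lQM hs //.
  exact: addfun0 (lQDr a).
- by move=> _ [a [al [b ->]]] x; rewrite lQBl !lQM -lQ_lUQ lUQ_lQ subrr.
Qed.

Definition qJ_lift (y : AJ) : A := sval (cid (qJ_onto HqJ y)).
Lemma qJ_liftK y : qJ (qJ_lift y) = y. Proof. exact: svalP (cid (qJ_onto HqJ y)). Qed.

Lemma lQ_lift a x : lQ (qJ_lift (qJ a)) x = lQ a x.
Proof.
apply/eqP; rewrite -subr_eq0 -lQBl lQ_J //.
by apply/(qJ_ker HqJ); rewrite (qJB HqJ) qJ_liftK subrr.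
Qed.

Lemma lQ_le_quotient a u : rnorm (lQ a u) <= rnorm (qJ a) * rnorm u.
Proof.
apply/ler_addgt0Pr => e e0; have u0 := rnorm_ge0 u.
have [y Jy hy] := qJ_approx HqJ a (divr_gt0 e0 (ltr_wpDl u0 ltr01)).
have -> : lQ a u = lQ (a + y) u by rewrite lQDl (lQ_J Jy) addr0.
apply: le_trans (lQ_le _ _) _; apply: le_trans (ler_wpM2r u0 (ltW hy)) _.
by rewrite mulrDl lerD2l mulrC (mulrC (rnorm u)) frac_le.
Qed.

Lemma lQ_lift_bounded_linear u : bounded_linear (fun y => lQ (qJ_lift y) u).
Proof.
apply: (@bounded_linear_of _ _ _ _ (rnorm u)); rewrite ?rnorm_ge0 //.
- by move=> y y'; rewrite -(qJ_liftK y) -(qJ_liftK y') -(qJD HqJ) !lQ_lift lQDl.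
- by move=> k y; rewrite -(qJ_liftK y) -(qJZ HqJ) !lQ_lift lQZl.
- by move=> y; rewrite -{2}(qJ_liftK y) mulrC lQ_le_quotient.
Qed.

(* [S_l (a + J) := a.u_l], well defined since [J] acts trivially on [Q]. *)
Lemma cond_ii_of_pseudo_amenable : module_pseudo_amenable mulA qJ mulJ omega lQ rQ ->
  cond_ii mulA lUA rUA qJ omega lQ rQ lUQ rUQ.
Proof.
move=> [I [le [u [dir [approx_id u_comm]]]]].
exists I, le, (fun l y => lQ (qJ_lift y) (u l)).
split=> //; split; first by move=> l; apply: lQ_lift_bounded_linear.
have norm0 (f : I -> Q) : (forall l, f l = 0) -> net_to0 le (fun l => `|f l|).
  by move=> f0; apply: net_to0_eq0 => // l; rewrite f0 normr0.
split; first by move=> a b; apply: norm0 => l; rewrite !lQ_lift lQM subrr.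
split.
  move=> a b; apply/net_to0_small.
  apply: (small_le _ (small_scale (rnorm_ge0 b) (proj1 (net_to0_small _ _) (u_comm a)))).
  by move=> l; rewrite !lQ_lift lQM -lQ_rQ -lQBr !cabs_norm lQ_le.
split; first by move=> al b; apply: norm0 => l; rewrite !lQ_lift lUQ_lQ subrr.
split; first by move=> al b; apply: norm0 => l; rewrite !lQ_lift -lQ_lUQ HQcomm lQ_rUQ subrr.
move=> a; move: (approx_id a).2; congr net_to0; apply: funext => l.
by rewrite lQ_lift omega_lQ.
Qed.

Lemma approx_diagonal_estimate (S : AJ -> Q) (c a : A) (eps : R) :
  mulJ (qJ c) (qJ a) = mulJ (qJ a) (qJ c) ->
  rnorm (mulJ (qJ c) (qJ a) - qJ a) < eps / 2 ->
  rnorm (mulJ (qJ a) (qJ c) - qJ a) < eps / 2 ->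
  rnorm (qJ a) * rnorm (omega (S (qJ c)) - qJ c) < eps / 2 ->
  rnorm (S (qJ (mulA a c)) - lQ a (S (qJ c))) < eps / 2 ->
  rnorm (S (qJ (mulA c a)) - rQ (S (qJ c)) a) < eps / 2 ->
  [/\ rnorm (mulJ (omega (S (qJ c))) (qJ a) - qJ a) < eps,
      rnorm (mulJ (qJ a) (omega (S (qJ c))) - qJ a) < eps &
      rnorm (lQ a (S (qJ c)) - rQ (S (qJ c)) a) < eps].
Proof.
move=> c_comm hl hr hom hSl hSr; set u := S (qJ c).
split.
- have -> : mulJ (omega u) (qJ a) - qJ a =
      mulJ (omega u - qJ c) (qJ a) + (mulJ (qJ c) (qJ a) - qJ a).
    by rewrite (mulJBl HA HqJ HmulJ) addrA subrK.
  have h : rnorm (mulJ (omega u - qJ c) (qJ a)) <= rnorm (qJ a) * rnorm (omega u - qJ c).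
    by rewrite mulrC (mulJ_le HA HqJ HmulJ).
  by apply: le_lt_trans (rnormD _ _) _; lra.
- have -> : mulJ (qJ a) (omega u) - qJ a =
      mulJ (qJ a) (omega u - qJ c) + (mulJ (qJ a) (qJ c) - qJ a).
    by rewrite (mulJBr HA HqJ HmulJ) addrA subrK.
  have h := mulJ_le HA HqJ HmulJ (qJ a) (omega u - qJ c).
  by apply: le_lt_trans (rnormD _ _) _; lra.
- have E : qJ (mulA a c) = qJ (mulA c a) by rewrite -!HmulJ c_comm.
  have -> : lQ a u - rQ u a =
      - (S (qJ (mulA a c)) - lQ a u) + (S (qJ (mulA c a)) - rQ u a).
    by rewrite E opprB addrA subrK.
  by apply: le_lt_trans (rnormD _ _) _; rewrite rnormN; lra.
Qed.

(* Given [F] and [eps], first fix a central [e_k] that is an [eps/2]-identity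
   on [F], then an [S_l] that is [eps/2]-close to a module morphism at [e_k]. *)
Lemma approx_of_cond_ii : cond_ii mulA lUA rUA qJ omega lQ rQ lUQ rUQ ->
  has_central_approx_identity qJ mulJ -> approx_diagonals qJ mulJ omega lQ rQ.
Proof.
move=> [I [le [S [dir [_ [Sl [Sr [_ [_ Somega]]]]]]]]].
move=> [Ie [lee [e [dire [e_comm e_approx]]]]] F eps eps0.
have eps2 : 0 < eps / 2 by rewrite divr_gt0.
have [k Hk] := eventually_forall_seq dire (fun a =>
  eventually_and dire (small_of_net_to0_norm (e_approx a).1 eps2)
                      (small_of_net_to0_norm (e_approx a).2 eps2)) F.
have {}Hk := Hk k (dire.2.1 k).
set c := qJ_lift (e k); have ck : qJ c = e k by apply: qJ_liftK.
have [l Hl] := eventually_forall_seq dir (fun a =>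
  eventually_and dir
    (eventually_and dir (small_of_net_to0_norm (Sl a c) eps2)
                        (small_of_net_to0_norm (Sr a c) eps2))
    (small_scale (rnorm_ge0 (qJ a)) (small_of_net_to0_norm (Somega c)) eps2)) F.
exists (S l (qJ c)) => a aF.
have [hl hr] := Hk a aF; rewrite -ck in hl hr.
have [[hSl hSr] hom] := Hl l (dir.2.1 l) a aF.
by apply: approx_diagonal_estimate; rewrite // ck e_comm.
Qed.

Lemma rQ_bounded_linear a : bounded_linear (rQ^~ a). Proof. exact: HrQ. Qed.

Section ApproxOfCondIII.
Variables (I : Type) (le : I -> I -> Prop) (Tn : I -> (Q -> R[i]) -> (AJ -> R[i])).
Hypotheses (dir : directed le) (T_bl : forall l, dual_bounded_linear (Tn l))
  (T_r : forall a f, dual_elt f -> forall b, net_to0 le (fun l =>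
        Tn l (fun x => f (rQ x a)) (qJ b) - Tn l f (qJ (mulA b a))))
  (T_l : forall a f, dual_elt f -> forall b, net_to0 le (fun l =>
        Tn l (fun x => f (lQ a x)) (qJ b) - Tn l f (qJ (mulA a b))))
  (T_omega : forall phi, dual_elt phi -> forall b, net_to0 le (fun l =>
        Tn l (fun x => phi (omega x)) (qJ b) - phi (qJ b))).
Variables (Ie : Type) (lee : Ie -> Ie -> Prop) (e : Ie -> AJ).
Hypotheses (dire : directed lee) (e_comm : forall k y, mulJ (e k) y = mulJ y (e k))
  (e_approx : forall a, net_to0 lee (fun k => `|mulJ (e k) (qJ a) - qJ a|) /\
                        net_to0 lee (fun k => `|mulJ (qJ a) (e k) - qJ a|)).

Local Notation V := (Q * R[i])%type.

(* A functional [g] on [Q * C] is admissible when the transposes [T_l] of its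
   restriction [g (., 0)] converge, on central elements, to some [psi] with
   [psi (e_k) -> - g (0, 1)].  The functional [(u, t) |-> eps t] is not. *)
Definition admissible (g : V -> R[i]) := exists psi : AJ -> R[i],
  [/\ dual_elt psi, dual_elt (fun u => g (u, 0)),
      forall b, (forall y, mulJ (qJ b) y = mulJ y (qJ b)) ->
        net_to0 le (fun l => Tn l (fun u => g (u, 0)) (qJ b) - psi (qJ b))
    & net_to0 lee (fun k => psi (e k) + g (0, 1))].

Lemma admissible_add g1 g2 g : admissible g1 -> admissible g2 ->
  (forall v, g v = g1 v + g2 v) -> admissible g.
Proof.
move=> [p1 [dp1 dg1 n1 m1]] [p2 [dp2 dg2 n2 m2]] /funext ->.
exists (fun y => p1 y + p2 y); split; [exact: dual_elt_add | exact: dual_elt_add | |].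
- move=> b b_comm; move: (net_to0D dir (n1 b b_comm) (n2 b b_comm)); congr net_to0.
  by apply: funext => l; rewrite (dual_bounded_linearD (T_bl l)) // opprD addrACA.
- by move: (net_to0D dire m1 m2); congr net_to0; apply: funext => k; rewrite addrACA.
Qed.

Lemma admissible0 : admissible (fun _ => 0).
Proof.
exists (fun _ => 0); split; [exact: dual_elt0 | exact: dual_elt0 | |].
- by move=> b _; apply: net_to0_eq0 => // l; rewrite (dual_bounded_linear0 (T_bl l)) subr0.
- by apply: net_to0_eq0 => // k; rewrite addr0.
Qed.

Definition comm_defect a (v : V) : Q := lQ a v.1 - rQ v.1 a.
Definition left_defect a (v : V) : AJ := mulJ (omega v.1) (qJ a) - v.2 *: qJ a.
Definition right_defect a (v : V) : AJ := mulJ (qJ a) (omega v.1) - v.2 *: qJ a.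

Lemma comm_defectD a v w : comm_defect a (v + w) = comm_defect a v + comm_defect a w.
Proof.
rewrite /comm_defect /= (bounded_linearD (lQ_bounded_linear a)).
by rewrite (bounded_linearD (rQ_bounded_linear a)) opprD addrACA.
Qed.
Lemma comm_defectZ a c v : comm_defect a (c *: v) = c *: comm_defect a v.
Proof.
rewrite /comm_defect /= (bounded_linearZ (lQ_bounded_linear a)).
by rewrite (bounded_linearZ (rQ_bounded_linear a)) scalerBr.
Qed.
Lemma left_defectD a v w : left_defect a (v + w) = left_defect a v + left_defect a w.
Proof.
rewrite /left_defect /= (bounded_linearD omega_bounded_linear) (mulJDl HA HqJ HmulJ).
by rewrite scalerDl opprD addrACA.
Qed.
Lemma left_defectZ a c v : left_defect a (c *: v) = c *: left_defect a v.
Proof.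
rewrite /left_defect /= (bounded_linearZ omega_bounded_linear) (mulJZl HA HqJ HmulJ).
by rewrite scalerBr scalerA.
Qed.
Lemma right_defectD a v w : right_defect a (v + w) = right_defect a v + right_defect a w.
Proof.
rewrite /right_defect /= (bounded_linearD omega_bounded_linear) (mulJDr HA HqJ HmulJ).
by rewrite scalerDl opprD addrACA.
Qed.
Lemma right_defectZ a c v : right_defect a (c *: v) = c *: right_defect a v.
Proof.
rewrite /right_defect /= (bounded_linearZ omega_bounded_linear) (mulJZr HA HqJ HmulJ).
by rewrite scalerBr scalerA.
Qed.

Lemma admissible_comm_defect a h : dual_elt h -> admissible (fun v => h (comm_defect a v)).
Proof.
move=> dh; exists (fun _ => 0); split; first exact: dual_elt0.
- apply: dual_elt_comp dh _.
  exact: bounded_linear_sub (lQ_bounded_linear a) (rQ_bounded_linear a).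
- move=> b b_comm; have E : qJ (mulA a b) = qJ (mulA b a) by rewrite -!HmulJ b_comm.
  have dhl : dual_elt (fun x => h (lQ a x)) by apply: dual_elt_comp dh (lQ_bounded_linear a).
  have dhr : dual_elt (fun x => h (rQ x a)) by apply: dual_elt_comp dh (rQ_bounded_linear a).
  move: (net_to0B dir (T_l a dh b) (T_r a dh b)); congr net_to0; apply: funext => l.
  have -> : (fun u => h (comm_defect a (u, 0))) = (fun x => h (lQ a x) - h (rQ x a)).
    by apply: funext => x; rewrite /comm_defect (dual_eltB dh).
  by rewrite subr0 E (dual_bounded_linearB (T_bl l)) // opprB addrA subrK.
- apply: net_to0_eq0 => // k; rewrite add0r /comm_defect /=.
  rewrite (addfun0 (bounded_linearD (lQ_bounded_linear a))).
  by rewrite (addfun0 (bounded_linearD (rQ_bounded_linear a))) subrr (addfun0 (dual_eltD dh)).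
Qed.

Lemma admissible_omega psi c : dual_elt psi -> net_to0 lee (fun k => psi (e k) - c) ->
  admissible (fun v => psi (omega v.1) - v.2 * c).
Proof.
move=> dpsi psi_e; have E : (fun u => psi (omega (u, 0 : R[i]).1) - 0 * c) = psi \o omega.
  by apply: funext => u; rewrite mul0r subr0.
exists psi; split; rewrite ?E //.
- exact: dual_elt_comp dpsi omega_bounded_linear.
- by move=> b _; apply: T_omega.
- move: psi_e; congr net_to0; apply: funext => k /=.
  rewrite (addfun0 (bounded_linearD omega_bounded_linear)) (addfun0 (dual_eltD dpsi)).
  by rewrite mul1r add0r.
Qed.

Lemma admissible_left_defect a h : dual_elt h -> admissible (fun v => h (left_defect a v)).
Proof.
move=> dh; have -> : (fun v => h (left_defect a v)) =
    (fun v => h (mulJ (omega v.1) (qJ a)) - v.2 * h (qJ a)).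
  by apply: funext => v; rewrite /left_defect (dual_eltB dh) (dual_eltZ dh).
apply: (@admissible_omega (fun y => h (mulJ y (qJ a)))).
  exact: dual_elt_comp dh (mulJr_bounded_linear HA HqJ HmulJ _).
move: (net_to0N (dual_net_to0 dh (e_approx a).1)); congr net_to0.
by apply: funext => k; rewrite opprB.
Qed.

Lemma admissible_right_defect a h : dual_elt h -> admissible (fun v => h (right_defect a v)).
Proof.
move=> dh; have -> : (fun v => h (right_defect a v)) =
    (fun v => h (mulJ (qJ a) (omega v.1)) - v.2 * h (qJ a)).
  by apply: funext => v; rewrite /right_defect (dual_eltB dh) (dual_eltZ dh).
apply: (@admissible_omega (fun y => h (mulJ (qJ a) y))).
  exact: dual_elt_comp dh (mulJ_bounded_linear HA HqJ HmulJ _).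
move: (net_to0N (dual_net_to0 dh (e_approx a).2)); congr net_to0.
by apply: funext => k; rewrite opprB.
Qed.

Definition defect_seminorm a (v : V) : R :=
  rnorm (comm_defect a v) + rnorm (left_defect a v) + rnorm (right_defect a v).
Definition defect_sum (F : seq A) (v : V) : R :=
  foldr (fun a s => defect_seminorm a v + s) 0 F.

Lemma seminorm_comm_defect a : seminorm (fun v => rnorm (comm_defect a v)).
Proof. exact: seminorm_rnorm (comm_defectD a) (comm_defectZ a). Qed.
Lemma seminorm_left_defect a : seminorm (fun v => rnorm (left_defect a v)).
Proof. exact: seminorm_rnorm (left_defectD a) (left_defectZ a). Qed.
Lemma seminorm_right_defect a : seminorm (fun v => rnorm (right_defect a v)).
Proof. exact: seminorm_rnorm (right_defectD a) (right_defectZ a). Qed.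

Lemma seminorm_defect a : seminorm (defect_seminorm a).
Proof.
apply: seminormD (seminorm_right_defect a).
exact: seminormD (seminorm_comm_defect a) (seminorm_left_defect a).
Qed.

Lemma seminorm_defect_sum F : seminorm (defect_sum F).
Proof.
by elim: F => [|a F IH]; [apply: seminorm_zero | apply: seminormD (seminorm_defect a) IH].
Qed.

Lemma defect_seminorm_le_sum F v a : List.In a F -> defect_seminorm a v <= defect_sum F v.
Proof.
elim: F => [[]|b F IH] /= [<-|aF].
  by rewrite lerDl; apply/seminorm_ge0/seminorm_defect_sum.
by apply: le_trans (IH aF) _; rewrite lerDr; apply/seminorm_ge0/seminorm_defect.
Qed.

(* Splitting [g] along the summands of [defect_sum F] and factoring each piece
   through its defect map reduces [g] to a sum of admissible functionals. *)
Lemma admissible_of_dominated F g : complex_linear g ->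
  (forall v, `|g v| <= rc (defect_sum F v)) -> admissible g.
Proof.
elim: F g => [|a F IH] g g_lin g_le.
  have -> : g = fun _ => 0.
    by apply: funext => v; apply/eqP; rewrite -normr_le0 -rc0 g_le.
  exact: admissible0.
have [ga [g' [ga_lin g'_lin Eg ga_le g'_le]]] :=
  split_by_seminorms (seminorm_defect a) (seminorm_defect_sum F) g_lin g_le.
have [gcl [gr [gcl_lin gr_lin Ega gcl_le gr_le]]] := split_by_seminorms
  (seminormD (seminorm_comm_defect a) (seminorm_left_defect a))
  (seminorm_right_defect a) ga_lin ga_le.
have [gc [gl [gc_lin gl_lin Egcl gc_le gl_le]]] := split_by_seminorms
  (seminorm_comm_defect a) (seminorm_left_defect a) gcl_lin gcl_le.
have [hc dhc Ehc] := factor_through_dual (comm_defectD a) (comm_defectZ a) gc_lin gc_le.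
have [hl dhl Ehl] := factor_through_dual (left_defectD a) (left_defectZ a) gl_lin gl_le.
have [hr dhr Ehr] := factor_through_dual (right_defectD a) (right_defectZ a) gr_lin gr_le.
apply: (admissible_add _ (IH _ g'_lin g'_le) Eg).
apply: (admissible_add _ _ Ega); first apply: (admissible_add _ _ Egcl).
- by rewrite (funext Ehc); apply: admissible_comm_defect.
- by rewrite (funext Ehl); apply: admissible_left_defect.
- by rewrite (funext Ehr); apply: admissible_right_defect.
Qed.

Lemma defect_sumZ F c v : defect_sum F (c *: v) = cabs c * defect_sum F v.
Proof. by apply: rc_inj; rewrite rcM cabsE (seminorm_defect_sum F).2. Qed.

Lemma defect_sum_ge F (eps : R) :
  ~ (exists u, forall a, List.In a F ->
      [/\ rnorm (mulJ (omega u) (qJ a) - qJ a) < eps,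
          rnorm (mulJ (qJ a) (omega u) - qJ a) < eps & rnorm (lQ a u - rQ u a) < eps]) ->
  forall u, eps <= defect_sum F (u, 1).
Proof.
move=> no_approx u; rewrite leNgt; apply/negP => small; apply: no_approx.
exists u => a aF; have := defect_seminorm_le_sum (u, 1) aF.
rewrite /defect_seminorm /comm_defect /left_defect /right_defect /= scale1r => h.
have := rnorm_ge0 (lQ a u - rQ u a).
have := rnorm_ge0 (mulJ (omega u) (qJ a) - qJ a).
have := rnorm_ge0 (mulJ (qJ a) (omega u) - qJ a).
by split; lra.
Qed.

Lemma scaled_projection_dominated F (eps : R) : 0 < eps ->
  (forall u, eps <= defect_sum F (u, 1)) ->
  forall v : V, `|rc eps * v.2| <= rc (defect_sum F v).
Proof.
move=> eps0 big [u t] /=; have e0 : 0 <= rc eps by rewrite rc_ge0 ltW.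
have [->|t0] := eqVneq t 0.
  by rewrite mulr0 normr0 rc_ge0; apply/seminorm_ge0/seminorm_defect_sum.
have -> : (u, t) = t *: (t^-1 *: u, 1).
  by rewrite -[RHS]/(t *: (t^-1 *: u), t * 1) scalerA mulfV // scale1r mulr1.
rewrite defect_sumZ rcM cabsE normrM (ger0_norm e0) mulrC.
by apply: ler_wpM2l; rewrite ?normr_ge0 ?rc_le.
Qed.

(* If no approximate diagonal existed, the functional [(u, t) |-> eps t] would be
   dominated by [defect_sum F], hence admissible, which it is not. *)
Lemma approx_of_weak_morphism : approx_diagonals qJ mulJ omega lQ rQ.
Proof.
move=> F eps eps0; apply: contrapT => /defect_sum_ge big.
pose g (v : V) := rc eps * v.2.
have g_lin : complex_linear g by split=> [v w|c v]; rewrite /g /= (mulrDr, mulrCA).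
have [psi [_ _ psi_T psi_e]] :=
  admissible_of_dominated g_lin (scaled_projection_dominated eps0 big).
have g0 : (fun u => g (u, 0)) = fun _ => 0 by apply: funext => u; rewrite /g mulr0.
have psi_e0 k : psi (e k) = 0.
  have b_comm y : mulJ (qJ (qJ_lift (e k))) y = mulJ y (qJ (qJ_lift (e k))).
    by rewrite qJ_liftK e_comm.
  move: (psi_T _ b_comm); rewrite g0 qJ_liftK.
  under eq_fun => l do rewrite (dual_bounded_linear0 (T_bl l)) sub0r.
  by move=> /(net_to0_const dir) /eqP; rewrite oppr_eq0 => /eqP.
have : net_to0 lee (fun _ => rc eps).
  by move: psi_e; congr net_to0; apply: funext => k; rewrite psi_e0 add0r /g mulr1.
move=> /(net_to0_const dire); rewrite -(rc0 R) => /rc_inj eps_eq0.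
by move: eps0; rewrite eps_eq0 ltxx.
Qed.

End ApproxOfCondIII.

Lemma approx_of_cond_iii : cond_iii mulA lUA rUA qJ omega lQ rQ lUQ rUQ ->
  has_central_approx_identity qJ mulJ -> approx_diagonals qJ mulJ omega lQ rQ.
Proof.
move=> [I [le [Tn [dir [T_bl [T_r [T_l [_ [_ T_omega]]]]]]]]].
move=> [Ie [lee [e [dire [e_comm e_approx]]]]].
exact: (approx_of_weak_morphism dir T_bl T_r T_l T_omega dire e_comm e_approx).
Qed.

End PseudoAmenability.

Theorem theorem3p11 (R : realType)
  (* the Banach algebra frak A = U *)
  (U : completeNormedModType R[i]) (mulU : U -> U -> U)
  (* the Banach algebra A, a Banach U-module with compatible actions *)
  (A : completeNormedModType R[i]) (mulA : A -> A -> A)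
  (lUA : U -> A -> A) (rUA : A -> U -> A)
  (* the projective tensor product A \hat\otimes A *)
  (T : completeNormedModType R[i]) (tens : A -> A -> T)
  (* Q = A \hat\otimes_U A = (A \hat\otimes A) / I, with quotient map q *)
  (Q : completeNormedModType R[i]) (q : T -> Q)
  (* A / J with quotient map qJ and its product mulJ *)
  (AJ : completeNormedModType R[i]) (qJ : A -> AJ) (mulJ : AJ -> AJ -> AJ)
  (* canonical A-actions and U-actions on Q *)
  (lQ : A -> Q -> Q) (rQ : Q -> A -> Q) (lUQ : U -> Q -> Q) (rUQ : Q -> U -> Q)
  (* \tilde\omega_A *)
  (omega : Q -> AJ)
  (HU : banach_algebra mulU)
  (HA : banach_algebra mulA)
  (HUA : compatible_actions mulU mulA lUA rUA)
  (Htens : proj_tensor_product tens)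
  (Hq : quotient_map
          (closed_span (fun t => exists a al b,
              t = tens (rUA a al) b - tens a (lUA al b))) q)
  (HqJ : quotient_map
          (closed_ideal_gen mulA (fun x => exists a al b,
              x = mulA (rUA a al) b - mulA a (lUA al b))) qJ)
  (HmulJ : forall a b, mulJ (qJ a) (qJ b) = qJ (mulA a b))
  (HlQ : forall c, bounded_linear (lQ c) /\
           forall a b, lQ c (q (tens a b)) = q (tens (mulA c a) b))
  (HrQ : forall c, bounded_linear (fun x => rQ x c) /\
           forall a b, rQ (q (tens a b)) c = q (tens a (mulA b c)))
  (HlUQ : forall al, bounded_linear (lUQ al) /\
           forall a b, lUQ al (q (tens a b)) = q (tens (lUA al a) b))
  (HrUQ : forall al, bounded_linear (fun x => rUQ x al) /\
           forall a b, rUQ (q (tens a b)) al = q (tens a (rUA b al)))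
  (Homega : bounded_linear omega /\
           forall a b, omega (q (tens a b)) = qJ (mulA a b))
  (* Q is a commutative Banach A-U-module *)
  (HQmod : banach_AU_module mulU mulA lUA rUA lQ rQ lUQ rUQ)
  (HQcomm : commutative_U_action lUQ rUQ) :
  let i_ := module_pseudo_amenable mulA qJ mulJ omega lQ rQ in
  let ii_ := cond_ii mulA lUA rUA qJ omega lQ rQ lUQ rUQ in
  let iii_ := cond_iii mulA lUA rUA qJ omega lQ rQ lUQ rUQ in
  (i_ -> ii_) /\ (ii_ -> iii_) /\
  (has_central_approx_identity qJ mulJ -> (i_ <-> ii_) /\ (ii_ <-> iii_)).
Proof.
move=> i_ ii_ iii_.
have i_ii : i_ -> ii_.
  exact: cond_ii_of_pseudo_amenable HA Htens Hq HqJ HmulJ HlQ Homega HQmod HQcomm.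
have ii_iii : ii_ -> iii_ by apply: cond_iii_of_cond_ii.
have ii_i : has_central_approx_identity qJ mulJ -> ii_ -> i_.
  by move=> ca /(approx_of_cond_ii HA HqJ HmulJ)/(_ ca); apply: pseudo_amenable_of_approx.
have iii_i : has_central_approx_identity qJ mulJ -> iii_ -> i_.
  move=> ca /(approx_of_cond_iii HA HqJ HmulJ HlQ (fun c => (HrQ c).1) Homega)/(_ ca).
  exact: pseudo_amenable_of_approx.
split=> //; split=> // ca.
by split; split=> // h; [exact: ii_i ca h | exact/i_ii/(iii_i ca)].
Qed.
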